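(* Let the data $\eta,Q_g,\Psi,c_{max},\theta_s$ be as in the context, and let the pyrolysis heat satisfy $Q_p>0$. Let $c_{min}\in(c_{max},0)$ be the unique value with $\theta_s(c_{min})=\frac{Q_p}{Q_g+Q_p}$. Then there exists exactly one $c\in[c_{max},0]$ for which the interface problem (P$_c$) described in the context admits a solution $\theta$, and this $c$ belongs to the interval $(c_{max},c_{min})$.
   Context: Dimensionless travelling-wave formulation of a solid-propellant combustion model ($x<0$ inert solid, $x>0$ gas, interface at $x=0$; $\theta$ dimensionless temperature; $c<0$ dimensionless regression velocity). Data: $\eta>0$; gas reaction heat $Q_g>0$; pyrolysis heat $Q_p\in\mathbb R$; $\Psi:[0,1]\to[0,\infty)$ of class $C^\infty$ with $\Psi(\theta)>0$ for $\theta\in[0,1)$ and $\Psi(1)=0$; a number $c_{max}<0$ and a surface-temperature map $\theta_s:[c_{max},0]\to[0,1]$ (inverse of a pyrolysis law with cut-off at the initial temperature) that is continuous and strictly decreasing with $\theta_s(0)=0$, $\theta_s(c_{max})=1$, and $C^\infty$ on $[c_{max},0)$ with $\theta_s'(c)<0$ there. Define $S(c):=\eta\,\frac{Q_p}{Q_p+Q_g}\,c$. For $c\in[c_{max},0]$, problem (P$_c$) asks for $\theta:\mathbb R\to[0,1]$, continuous, of class $C^2$ on $(-\infty,0]$ and on $[0,\infty)$ (one-sided derivatives at $0$), such that $\theta''+c\theta'=0$ for $x<0$; $\theta''+\eta c\theta'=-\Psi(\theta)$ for $x>0$; $\theta(x)\to0$ as $x\to-\infty$, $\theta(0)=\theta_s(c)$,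 $\theta(x)\to1$ as $x\to+\infty$, $\theta'(x)\to0$ as $x\to\pm\infty$; and the interface heat balance $\theta'(0^+)-\eta\,\theta'(0^-)=S(c)$. *)

From Stdlib Require Import Reals Lra.
From Coquelicot Require Import Coquelicot.
Open Scope R_scope.

Definition smooth_on_open (U : R -> Prop) (f : R -> R) : Prop :=
  forall (n : nat) (x : R), U x -> ex_derive_n f n x.

Definition C2 (f : R -> R) : Prop :=
  (forall x, ex_derive f x) /\
  (forall x, ex_derive (Derive f) x) /\
  (forall x, continuous (Derive (Derive f)) x).

Definition S (eta Qg Qp c : R) : R := eta * (Qp / (Qp + Qg)) * c.

(* The C^2 regularity of theta on (-oo,0] and on
   [0,+oo) (one-sided derivatives at 0) is expressed by C^2 functions
   thl, thr on R agreeing with theta on (-oo,0], resp. [0,+oo); the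
   one-sided derivatives of theta are then those of thl, thr. *)
Definition Pc (eta Qg Qp : R) (Psi thetas : R -> R) (c : R) (theta : R -> R)
  : Prop :=
  (forall x, 0 <= theta x <= 1) /\
  (forall x, continuous theta x) /\
  exists thl thr : R -> R,
    C2 thl /\ C2 thr /\
    (forall x, x <= 0 -> thl x = theta x) /\
    (forall x, 0 <= x -> thr x = theta x) /\
    (forall x, x < 0 -> Derive (Derive thl) x + c * Derive thl x = 0) /\
    (forall x, 0 < x ->
       Derive (Derive thr) x + eta * c * Derive thr x = - Psi (theta x)) /\
    is_lim theta m_infty 0 /\
    theta 0 = thetas c /\
    is_lim theta p_infty 1 /\
    is_lim (Derive thl) m_infty 0 /\
    is_lim (Derive thr) p_infty 0 /\
    Derive thr 0 - eta * Derive thl 0 = S eta Qg Qp c.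

(* Existence: on x < 0 any solution is theta(0) exp(- c x), so the interface condition
   becomes theta'(0+) = k (theta_s(c) - q) with k = - eta c and q = Qp / (Qp + Qg), and
   on x > 0 we shoot (T, P) = (theta, theta') from that point. For c = cmax the
   trajectory crosses T = 1 at once; for c = cmin it starts with P = 0 and turns down
   below T = 1. Both behaviours are open in c by Gronwall's inequality, so a speed
   between them does neither; there P > 0 and T < 1 forever, which forces (T, P) to
   converge to the equilibrium (1, 0). The trajectories exist for all x by Picard
   iteration, after extending Psi to a globally Lipschitz function.
   Uniqueness: for speeds c2 < c1 compare the two trajectories at equal temperature.
   The gap P1/k1 - P2/k2 starts negative and decreases while negative, yet P2 -> 0
   with P1 > 0 makes it eventually exceed its initial value. *)

From Pilot Require Import Defs.
From Stdlib Require Import Reals Lra Lia Classical ClassicalEpsilon Ranalysis5.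
From Coquelicot Require Import Coquelicot.
Open Scope R_scope.

(** * Calculus on the real line *)

Lemma continuity_pt_is_derive (f : R -> R) (x l : R) : is_derive f x l -> continuity_pt f x.
Proof.
  intros H. apply continuity_pt_filterlim, (ex_derive_continuous f x). now exists l.
Qed.

Lemma continuity_pt_ex_derive (f : R -> R) (x : R) : ex_derive f x -> continuity_pt f x.
Proof. intros [l H]. exact (continuity_pt_is_derive f x l H). Qed.

Lemma MVT_interior (f df : R -> R) (a b : R) : a < b ->
  (forall x, a < x < b -> is_derive f x (df x)) ->
  (forall x, a <= x <= b -> continuity_pt f x) ->
  exists c, a < c < b /\ f b - f a = df c * (b - a).
Proof.
  intros Hab Hd Hc.
  assert (pr1 : forall c, a < c < b -> derivable_pt f c).
  { intros c Hc'. exists (df c). apply is_derive_Reals, Hd, Hc'. }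
  assert (pr2 : forall c, a < c < b -> derivable_pt id c)
    by (intros; apply derivable_pt_id).
  destruct (MVT f id a b pr1 pr2 Hab Hc) as [c [Hc' Heq]].
  { intros; apply derivable_continuous_pt, derivable_pt_id. }
  exists c; split; [exact Hc'|].
  rewrite (derive_pt_eq_0 f c (df c) (pr1 c Hc')) in Heq
    by (apply is_derive_Reals, Hd, Hc').
  rewrite (derive_pt_eq_0 id c 1 (pr2 c Hc')) in Heq by apply derivable_pt_lim_id.
  unfold id in Heq. lra.
Qed.

Section Monotonicity.
Variables (f df : R -> R) (a b : R).
Hypothesis f_derive : forall x, a < x < b -> is_derive f x (df x).
Hypothesis f_cont : forall x, a <= x <= b -> continuity_pt f x.

Lemma le_of_is_derive_nonneg : a <= b -> (forall x, a < x < b -> 0 <= df x) -> f a <= f b.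
Proof.
  intros [Hab|<-] Hpos; [|lra].
  destruct (MVT_interior f df a b Hab f_derive f_cont) as [c [Hc Heq]].
  specialize (Hpos c Hc). nra.
Qed.

Lemma lt_of_is_derive_pos : a < b -> (forall x, a < x < b -> 0 < df x) -> f a < f b.
Proof.
  intros Hab Hpos.
  destruct (MVT_interior f df a b Hab f_derive f_cont) as [c [Hc Heq]].
  specialize (Hpos c Hc). nra.
Qed.

Lemma le_of_is_derive_nonpos : a <= b -> (forall x, a < x < b -> df x <= 0) -> f b <= f a.
Proof.
  intros [Hab|<-] Hneg; [|lra].
  destruct (MVT_interior f df a b Hab f_derive f_cont) as [c [Hc Heq]].
  specialize (Hneg c Hc). nra.
Qed.

Lemma lt_of_is_derive_neg : a < b -> (forall x, a < x < b -> df x < 0) -> f b < f a.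
Proof.
  intros Hab Hneg.
  destruct (MVT_interior f df a b Hab f_derive f_cont) as [c [Hc Heq]].
  specialize (Hneg c Hc). nra.
Qed.

Lemma eq_of_is_derive_zero : a <= b -> (forall x, a < x < b -> df x = 0) -> f a = f b.
Proof.
  intros Hab H0.
  assert (f a <= f b) by (apply le_of_is_derive_nonneg; [|intros x Hx; rewrite H0]; auto with real).
  assert (f b <= f a) by (apply le_of_is_derive_nonpos; [|intros x Hx; rewrite H0]; auto with real).
  lra.
Qed.

End Monotonicity.

Lemma is_derive_pos_right (f : R -> R) (x l : R) : is_derive f x l -> 0 < l ->
  exists d, 0 < d /\ forall h, 0 < h < d -> f x < f (x + h).
Proof.
  intros H Hl. apply is_derive_Reals in H.
  destruct (H (l / 2) ltac:(lra)) as [d Hd].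
  exists d; split; [apply cond_pos|]. intros h Hh.
  assert (A := Hd h ltac:(lra) ltac:(rewrite Rabs_right; lra)).
  apply Rabs_lt_between in A.
  assert (Hq : l / 2 < (f (x + h) - f x) / h) by lra.
  apply (Rmult_lt_compat_r h) in Hq; [|lra].
  replace ((f (x + h) - f x) / h * h) with (f (x + h) - f x) in Hq by (field; lra).
  nra.
Qed.

Lemma is_derive_neg_right (f : R -> R) (x l : R) : is_derive f x l -> l < 0 ->
  exists d, 0 < d /\ forall h, 0 < h < d -> f (x + h) < f x.
Proof.
  intros H Hl.
  destruct (is_derive_pos_right (fun y => - f y) x (- l)) as [d [Hd Hright]].
  - exact (is_derive_opp f x l H).
  - lra.
  - exists d; split; [exact Hd|]. intros h Hh. specialize (Hright h Hh). lra.
Qed.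

Lemma is_derive_interior_max (f : R -> R) (x l a b : R) : a < x < b -> is_derive f x l ->
  (forall y, a < y < b -> f y <= f x) -> l = 0.
Proof.
  intros Hx H Hmax.
  assert (pr : derivable_pt f x) by (exists l; apply is_derive_Reals, H).
  rewrite <- (derive_pt_eq_0 f x l pr) by apply is_derive_Reals, H.
  apply (deriv_maximum f a b x pr); lra || (intros; apply Hmax; lra).
Qed.

Lemma is_derive_const_plus_RInt (c : R) (f : R -> R) (x : R) : (forall y, continuous f y) ->
  is_derive (fun y => c + RInt f 0 y) x (f x).
Proof.
  intros Hf.
  replace (f x) with (0 + f x) by ring.
  apply (is_derive_plus (fun _ => c) (fun y => RInt f 0 y)).
  - apply (@is_derive_const R_AbsRing R_NormedModule).
  - apply is_derive_RInt with (a := 0); [|apply Hf].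
    apply filter_forall. intros y. apply (RInt_correct f 0 y), ex_RInt_continuous.
    intros; apply Hf.
Qed.

Lemma const_plus_RInt_0 (c : R) (f : R -> R) : c + RInt f 0 0 = c.
Proof. rewrite RInt_point. unfold zero; simpl. ring. Qed.

Lemma Rabs_two_mul_le a b : Rabs (2 * a * b) <= a ^ 2 + b ^ 2.
Proof.
  apply Rabs_le. pose proof (pow2_ge_0 (a + b)). pose proof (pow2_ge_0 (a - b)). nra.
Qed.

Lemma exp_le_of_le x y : x <= y -> exp x <= exp y.
Proof. intros [H|<-]; [left; apply exp_increasing, H| right; reflexivity]. Qed.

Lemma Rabs_sub_le_of_is_derive (g h B b : R -> R) a x : a <= x ->
  (forall s, a <= s <= x -> is_derive g s (h s)) ->
  (forall s, a <= s <= x -> is_derive B s (b s)) ->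
  (forall s, a <= s <= x -> Rabs (h s) <= b s) ->
  Rabs (g x - g a) <= B x - B a.
Proof.
  intros Hax Hg HB Hb.
  assert (Hcont : forall f df : R -> R, (forall s, a <= s <= x -> is_derive f s (df s)) ->
            forall s, a <= s <= x -> continuity_pt f s)
    by (intros f df Hf s Hs; exact (continuity_pt_is_derive f s _ (Hf s Hs))).
  assert (Hminus : B a - g a <= B x - g x).
  { apply (le_of_is_derive_nonneg (fun s => B s - g s) (fun s => b s - h s)); auto.
    - intros s Hs. apply (is_derive_minus B g s (b s) (h s)); [apply HB | apply Hg]; lra.
    - apply (Hcont _ (fun s => b s - h s)).
      intros s Hs. apply (is_derive_minus B g s (b s) (h s)); [apply HB | apply Hg]; lra.
    - intros s Hs. specialize (Hb s ltac:(lra)). apply Rabs_le_between in Hb. lra. }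
  assert (Hplus : B a + g a <= B x + g x).
  { apply (le_of_is_derive_nonneg (fun s => B s + g s) (fun s => b s + h s)); auto.
    - intros s Hs. apply (is_derive_plus B g s (b s) (h s)); [apply HB | apply Hg]; lra.
    - apply (Hcont _ (fun s => b s + h s)).
      intros s Hs. apply (is_derive_plus B g s (b s) (h s)); [apply HB | apply Hg]; lra.
    - intros s Hs. specialize (Hb s ltac:(lra)). apply Rabs_le_between in Hb. lra. }
  apply Rabs_le_between. lra.
Qed.

Lemma Rabs_le_exp_of_is_derive (g h : R -> R) C lam x : 0 < lam -> 0 <= x -> g 0 = 0 ->
  (forall s, 0 <= s <= x -> is_derive g s (h s)) ->
  (forall s, 0 <= s <= x -> Rabs (h s) <= C * exp (lam * s)) ->
  Rabs (g x) <= C / lam * exp (lam * x).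
Proof.
  intros Hlam Hx Hg0 Hg Hh.
  assert (HC : 0 <= C).
  { specialize (Hh 0 ltac:(lra)). rewrite Rmult_0_r, exp_0 in Hh.
    pose proof (Rabs_pos (h 0)). lra. }
  assert (H := Rabs_sub_le_of_is_derive g h (fun s => C / lam * exp (lam * s))
                 (fun s => C * exp (lam * s)) 0 x Hx Hg).
  rewrite Hg0, Rminus_0_r, Rmult_0_r, exp_0 in H.
  assert (0 <= C / lam) by (apply Rdiv_le_0_compat; lra).
  enough (Rabs (g x) <= C / lam * exp (lam * x) - C / lam * 1) by lra.
  apply H; [|exact Hh].
  intros s _. auto_derive; [exact I|]. field. lra.
Qed.

Lemma is_lim_p_infty_eps (f : R -> R) (l : R) : is_lim f p_infty l ->
  forall eps, 0 < eps -> exists M, forall x, M < x -> Rabs (f x - l) < eps.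
Proof.
  intros H eps Heps. apply is_lim_spec in H.
  destruct (H (mkposreal eps Heps)) as [M HM]. now exists M.
Qed.

Lemma is_lim_p_infty_le (f : R -> R) (l B x0 : R) : is_lim f p_infty l ->
  (forall x, x0 <= x -> f x <= B) -> l <= B.
Proof.
  intros Hl HB.
  apply (is_lim_le_loc f (fun _ => B) p_infty l B); [|exact Hl| apply is_lim_const].
  exists x0. intros x Hx. apply HB. lra.
Qed.

Lemma is_lim_p_infty_ge (f : R -> R) (l B x0 : R) : is_lim f p_infty l ->
  (forall x, x0 <= x -> B <= f x) -> B <= l.
Proof.
  intros Hl HB.
  apply (is_lim_le_loc (fun _ => B) f p_infty B l); [|apply is_lim_const| exact Hl].
  exists x0. intros x Hx. apply HB. lra.
Qed.

Lemma is_lim_m_infty_eventually_const (f : R -> R) (C l : R) :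
  (forall x, x <= 0 -> f x = C) -> is_lim f m_infty l -> C = l.
Proof.
  intros HC Hl.
  assert (H : is_lim (fun _ => C) m_infty l).
  { apply (is_lim_ext_loc f); [|exact Hl]. exists 0. intros x Hx. apply HC. lra. }
  apply is_lim_unique in H. rewrite Lim_const in H. now injection H.
Qed.

Lemma is_lim_exp_linear_m_infty (K c : R) : c < 0 ->
  is_lim (fun x => K * exp (- c * x)) m_infty 0.
Proof.
  intros Hc.
  assert (Hlin : is_lim (fun x => - c * x) m_infty m_infty).
  { assert (H := is_lim_scal_l (fun x => x) (- c) m_infty m_infty (is_lim_id m_infty)).
    simpl in H. destruct (Rle_dec 0 (- c)) as [Hle|]; [|lra].
    destruct (Rle_lt_or_eq_dec 0 (- c) Hle); [exact H| lra]. }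
  replace (Finite 0) with (Rbar_mult K 0) by (simpl; f_equal; ring).
  apply is_lim_scal_l.
  apply (is_lim_comp exp (fun x => - c * x) m_infty 0 m_infty); [apply is_lim_exp_m| exact Hlin|].
  exists 0. intros x _. easy.
Qed.

Lemma is_lim_p_infty_nondecreasing (f : R -> R) (B : R) :
  (forall x y, 0 <= x <= y -> f x <= f y) -> (forall x, 0 <= x -> f x <= B) ->
  exists l : R, is_lim f p_infty l /\ forall x, 0 <= x -> f x <= l.
Proof.
  intros Hmono HB.
  set (E := fun v => exists x, 0 <= x /\ v = f x).
  assert (HE : bound E) by (exists B; intros v [x [Hx ->]]; auto).
  destruct (completeness E HE (ex_intro _ (f 0) (ex_intro _ 0 (conj (Rle_refl 0) eq_refl))))
    as [l [Hub Hlub]].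
  assert (Hle : forall x, 0 <= x -> f x <= l) by (intros x Hx; apply Hub; now exists x).
  exists l. split; [|exact Hle].
  apply is_lim_spec. intros eps.
  destruct (classic (exists x, 0 <= x /\ l - eps < f x)) as [[x [Hx Hfx]]|Hn].
  - exists x. intros y Hy. specialize (Hmono x y ltac:(lra)). specialize (Hle y ltac:(lra)).
    apply Rabs_lt_between. lra.
  - exfalso. assert (l <= l - eps); [|pose proof (cond_pos eps); lra].
    apply Hlub. intros v [x [Hx ->]]. apply Rnot_lt_le. intros H. apply Hn. now exists x.
Qed.

Lemma is_lim_p_infty_nonincreasing (f : R -> R) (B : R) :
  (forall x y, 0 <= x <= y -> f y <= f x) -> (forall x, 0 <= x -> B <= f x) ->
  exists l : R, is_lim f p_infty l.
Proof.
  intros Hmono HB.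
  destruct (is_lim_p_infty_nondecreasing (fun x => - f x) (- B)) as [l [Hl _]].
  - intros x y Hxy. specialize (Hmono x y Hxy). lra.
  - intros x Hx. specialize (HB x Hx). lra.
  - exists (- l). apply (is_lim_ext (fun x => - - f x)); [intros; ring|].
    apply (is_lim_opp (fun x => - f x) p_infty l Hl).
Qed.

Lemma geometric_half_lt K eps : 0 < eps -> exists N, forall n, (N <= n)%nat -> K * (/2)^n < eps.
Proof.
  intros He. destruct (Rle_dec K 0) as [HK|HK].
  - exists O. intros n _. pose proof (pow_le (/2) n ltac:(lra)). nra.
  - destruct (pow_lt_1_zero (/2) ltac:(rewrite Rabs_right; lra) (eps / K)
                ltac:(apply Rdiv_lt_0_compat; lra)) as [N HN].
    exists N. intros n Hn. specialize (HN n Hn).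
    rewrite Rabs_right in HN by (apply Rle_ge, pow_le; lra).
    apply (Rmult_lt_compat_l K) in HN; [|lra].
    replace (K * (eps / K)) with eps in HN by (field; lra). lra.
Qed.

Lemma eq_0_of_Rabs_le_geometric K y : (forall n, Rabs y <= K * (/2)^n) -> y = 0.
Proof.
  intros H. destruct (Req_dec y 0) as [E|E]; [exact E|]. exfalso.
  destruct (geometric_half_lt K (Rabs y) (Rabs_pos_lt y E)) as [N HN].
  specialize (HN N (le_n N)). specialize (H N). lra.
Qed.

Lemma continuity_pt_eps (f : R -> R) (x : R) : continuity_pt f x -> forall eps, 0 < eps ->
  exists d, 0 < d /\ forall y, Rabs (y - x) < d -> Rabs (f y - f x) < eps.
Proof.
  intros H eps He. destruct (H eps He) as [d [Hd H2]]. exists d. split; [exact Hd|].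
  intros y Hy. destruct (Req_dec y x) as [->|E].
  - rewrite Rminus_diag, Rabs_R0. lra.
  - apply (H2 y). split; [split; [exact I| auto]| exact Hy].
Qed.

Lemma within_continuity_eps (f : R -> R) (D : R -> Prop) c :
  filterlim f (within D (locally c)) (locally (f c)) ->
  forall eps, 0 < eps ->
  exists d, 0 < d /\ forall y, D y -> Rabs (y - c) < d -> Rabs (f y - f c) < eps.
Proof.
  intros H eps He.
  destruct (H _ (locally_ball (f c) (mkposreal eps He))) as [d Hd].
  exists d. split; [apply cond_pos|]. intros y Dy Hy. apply (Hd y); auto.
Qed.

Lemma continuity_pt_Rmax_0 s : continuity_pt (fun y => Rmax y 0) s.
Proof.
  apply (continuity_pt_ext (fun y => (y + Rabs y) / 2)).
  { intros y. unfold Rmax, Rabs. destruct (Rle_dec y 0), (Rcase_abs y); lra. }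
  apply continuity_pt_div; [| apply continuity_pt_const; now intros ? ? | lra].
  apply continuity_pt_plus; [apply continuity_pt_id | apply Rcontinuity_abs].
Qed.

Lemma decreasing_while_negative (f df : R -> R) (a b : R) : a < b ->
  (forall x, a <= x <= b -> continuity_pt f x) ->
  (forall x, a < x < b -> is_derive f x (df x)) ->
  (forall x, a < x < b -> f x < 0 -> df x < 0) ->
  f a < 0 -> f b < f a.
Proof.
  intros Hab Hc Hd Hneg Ha.
  assert (Hstep : forall y, a <= y < b -> f y < 0 -> exists z, y < z <= b /\ f z < f y).
  { intros y Hy Hfy.
    destruct (continuity_pt_eps f y (Hc y ltac:(lra)) (- f y) ltac:(lra)) as [d [Hd0 Hnear]].
    set (z := y + Rmin d (b - y) / 2).
    assert (Hm : 0 < Rmin d (b - y)) by (apply Rmin_pos; lra).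
    assert (Hz : y < z <= b) by (pose proof (Rmin_r d (b - y)); unfold z; lra).
    assert (Hzd : z - y < d) by (pose proof (Rmin_l d (b - y)); unfold z; lra).
    exists z. split; [exact Hz|].
    apply (lt_of_is_derive_neg f df y z); [intros; apply Hd; lra | intros; apply Hc; lra | lra|].
    intros x Hx. apply Hneg; [lra|].
    specialize (Hnear x ltac:(apply Rabs_lt_between; lra)). apply Rabs_lt_between in Hnear. lra. }
  destruct (continuity_ab_min f a b ltac:(lra) Hc) as [m [Hmin Hm]].
  destruct (Hstep a ltac:(lra) Ha) as [z [Hz Hfz]].
  destruct (Req_dec m b) as [->|Hmb].
  - specialize (Hmin z ltac:(lra)). lra.
  - destruct (Hstep m ltac:(lra) ltac:(specialize (Hmin a ltac:(lra)); lra)) as [w [Hw Hfw]].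
    specialize (Hmin w ltac:(lra)). lra.
Qed.

Lemma interval_not_covered (A B : R -> Prop) lo hi : lo < hi -> A lo -> B hi ->
  (forall c, lo <= c <= hi -> A c -> B c -> False) ->
  (forall c, lo <= c <= hi -> A c ->
     exists d, 0 < d /\ forall c', lo <= c' <= hi -> Rabs (c' - c) < d -> A c') ->
  (forall c, lo <= c <= hi -> B c ->
     exists d, 0 < d /\ forall c', lo <= c' <= hi -> Rabs (c' - c) < d -> B c') ->
  exists c, lo <= c <= hi /\ ~ A c /\ ~ B c.
Proof.
  intros Hlh HA HB Hdis HoA HoB.
  set (S := fun c => lo <= c <= hi /\ forall c', lo <= c' <= c -> A c').
  assert (S0 : S lo) by (split; [lra| intros c' Hc'; now replace c' with lo by lra]).
  assert (Sb : bound S) by (exists hi; intros x [Hx _]; lra).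
  destruct (completeness S Sb (ex_intro _ lo S0)) as [s [Hub Hlub]].
  assert (slo : lo <= s) by (apply Hub; exact S0).
  assert (shi : s <= hi) by (apply Hlub; intros x [Hx _]; lra).
  assert (Hbelow : forall c', lo <= c' < s -> A c').
  { intros c' Hc'. apply NNPP. intros HnA.
    assert (s <= c'); [|lra].
    apply Hlub. intros x [Hx Hall]. apply Rnot_lt_le. intros Hlt. apply HnA, Hall. lra. }
  exists s. split; [lra|]. split.
  - intros As. destruct (HoA s ltac:(lra) As) as [d [Hd Hnear]].
    destruct (Req_dec s hi) as [Es|E]; [subst s; exact (Hdis hi ltac:(lra) As HB)|].
    set (s' := Rmin (s + d / 2) hi).
    assert (Hs' : s < s' /\ s' <= s + d / 2 /\ s' <= hi)
      by (split; [apply Rmin_glb_lt; lra| split; [apply Rmin_l| apply Rmin_r]]).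
    assert (s' <= s); [|lra].
    apply Hub. split; [lra|]. intros c' Hc'. destruct (Rlt_le_dec c' s).
    + apply Hbelow; lra.
    + apply Hnear; [lra| apply Rabs_def1; lra].
  - intros Bs. destruct (HoB s ltac:(lra) Bs) as [d [Hd Hnear]].
    destruct (Req_dec s lo) as [Es|E]; [subst s; exact (Hdis lo ltac:(lra) HA Bs)|].
    set (c' := Rmax lo (s - d / 2)).
    assert (Hc' : lo <= c' /\ s - d / 2 <= c' /\ c' < s)
      by (split; [apply Rmax_l| split; [apply Rmax_r| apply Rmax_lub_lt; lra]]).
    apply (Hdis c'); [lra| apply Hbelow; lra| apply Hnear; [lra| apply Rabs_def1; lra]].
Qed.

Lemma bounded_derive_limit_0 (f df : R -> R) (l B : R) :
  (forall x, 0 <= x -> is_derive f x (df x)) -> is_lim df p_infty l ->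
  (forall x, 0 <= x -> Rabs (f x) <= B) -> l = 0.
Proof.
  assert (Hpos : forall (f df : R -> R) (l : R), (forall x, 0 <= x -> is_derive f x (df x)) ->
            is_lim df p_infty l -> (forall x, 0 <= x -> Rabs (f x) <= B) -> ~ 0 < l).
  { intros g dg m Hd Hlim Hb Hm.
    destruct (is_lim_p_infty_eps dg m Hlim (m / 2) ltac:(lra)) as [M HM].
    set (x0 := Rmax M 0 + 1). set (x1 := x0 + 2 * (2 * B + 1) / m).
    pose proof (Rmax_l M 0). pose proof (Rmax_r M 0).
    assert (HB : 0 <= B) by (specialize (Hb 0 (Rle_refl 0)); pose proof (Rabs_pos (g 0)); lra).
    assert (Hx01 : x0 < x1) by (unfold x1; assert (0 < 2 * (2 * B + 1) / m) by
                                  (apply Rdiv_lt_0_compat; lra); lra).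
    assert (Hgrow : g x0 - m / 2 * x0 <= g x1 - m / 2 * x1).
    { apply (le_of_is_derive_nonneg (fun s => g s - m / 2 * s) (fun s => dg s - m / 2 * 1));
        [| |lra|].
      - intros s Hs. apply (is_derive_minus g (fun s => m / 2 * s)); [apply Hd; unfold x0 in *; lra|].
        apply (is_derive_scal (fun s => s)), (@is_derive_id R_AbsRing).
      - intros s Hs. apply continuity_pt_minus.
        + apply (continuity_pt_is_derive g s (dg s)), Hd. unfold x0 in *; lra.
        + apply continuity_pt_mult; [apply continuity_pt_const; now intros ? ?| apply continuity_pt_id].
      - intros s Hs. specialize (HM s ltac:(unfold x0 in *; lra)). apply Rabs_lt_between in HM. lra. }
    assert (Hx1x0 : m / 2 * (x1 - x0) = 2 * B + 1) by (unfold x1; field; lra).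
    pose proof (Hb x0 ltac:(unfold x0; lra)). pose proof (Hb x1 ltac:(unfold x0 in *; lra)).
    apply Rabs_le_between in H1. apply Rabs_le_between in H2. lra. }
  intros Hd Hlim Hb.
  destruct (Rtotal_order l 0) as [Hl|[Hl|Hl]]; [exfalso| exact Hl| exfalso].
  - apply (Hpos (fun x => - f x) (fun x => - df x) (- l)); [| | |lra].
    + intros x Hx. apply (is_derive_opp f x (df x)), Hd, Hx.
    + apply (is_lim_opp df p_infty l Hlim).
    + intros x Hx. rewrite Rabs_Ropp. apply Hb, Hx.
  - exact (Hpos f df l Hd Hlim Hb Hl).
Qed.

Lemma gronwall (w dw : R -> R) C E x : 0 < C -> 0 <= E -> 0 <= x ->
  (forall s, 0 < s < x -> is_derive w s (dw s)) ->
  (forall s, 0 <= s <= x -> continuity_pt w s) ->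
  (forall s, 0 < s < x -> dw s <= C * w s + E) ->
  w x <= (w 0 + E / C) * exp (C * x).
Proof.
  intros HC HE Hx Hd Hc Hdw.
  set (v := fun s => (w s + E / C) * exp (- C * s)).
  assert (Hv : v x <= v 0).
  { apply (le_of_is_derive_nonpos v (fun s => (dw s - C * w s - E) * exp (- C * s))); auto.
    - intros s Hs. unfold v. pose proof (Hd s Hs) as Hws.
      assert (Hex : ex_derive w s) by (eexists; exact Hws).
      auto_derive; [auto|]. change (fun y => w y) with w.
      rewrite (is_derive_unique w s (dw s) Hws). field. lra.
    - intros s Hs. unfold v. apply continuity_pt_mult.
      + apply continuity_pt_plus; [auto| apply continuity_pt_const; now intros ? ?].
      + apply continuity_pt_ex_derive. auto_derive. exact I.
    - intros s Hs. specialize (Hdw s Hs). pose proof (exp_pos (- C * s)). nra. }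
  unfold v in Hv. rewrite Rmult_0_r, exp_0, Rmult_1_r in Hv.
  apply (Rmult_le_compat_r (exp (C * x))) in Hv; [|left; apply exp_pos].
  rewrite Rmult_assoc, <- exp_plus in Hv.
  replace (- C * x + C * x) with 0 in Hv by ring. rewrite exp_0 in Hv.
  assert (0 <= E / C) by (apply Rdiv_le_0_compat; lra).
  lra.
Qed.

Lemma gronwall_backward (w dw : R -> R) C x : 0 <= x ->
  (forall s, 0 < s < x -> is_derive w s (dw s)) ->
  (forall s, 0 <= s <= x -> continuity_pt w s) ->
  (forall s, 0 < s < x -> - C * w s <= dw s) ->
  w 0 <= w x * exp (C * x).
Proof.
  intros Hx Hd Hc Hdw.
  replace (w 0) with (w 0 * exp (C * 0)) by (rewrite Rmult_0_r, exp_0; ring).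
  apply (le_of_is_derive_nonneg (fun s => w s * exp (C * s))
           (fun s => (dw s + C * w s) * exp (C * s))); auto.
  - intros s Hs. pose proof (Hd s Hs) as Hws.
    assert (Hex : ex_derive w s) by (eexists; exact Hws).
    auto_derive; [auto|]. change (fun y => w y) with w.
    rewrite (is_derive_unique w s (dw s) Hws). ring.
  - intros s Hs. apply continuity_pt_mult; [auto|].
    apply continuity_pt_ex_derive. auto_derive. exact I.
  - intros s Hs. specialize (Hdw s Hs). pose proof (exp_pos (C * s)). nra.
Qed.

Definition preimage (T : R -> R) (t : R) :=
  epsilon (inhabits 0) (fun x => 0 <= x /\ T x = t).

Section IncreasingInverse.
Variables (T P : R -> R).
Hypothesis T_derive : forall x, is_derive T x (P x).
Hypothesis P_pos : forall x, 0 <= x -> 0 < P x.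
Hypothesis T_lim : is_lim T p_infty 1.

Lemma increasing_T_lt x y : 0 <= x -> x < y -> T x < T y.
Proof.
  intros Hx Hxy. apply (lt_of_is_derive_pos T P); auto.
  - intros s _. apply continuity_pt_is_derive with (P s). apply T_derive.
  - intros s Hs. apply P_pos. lra.
Qed.

Lemma increasing_T_lt_1 x : 0 <= x -> T x < 1.
Proof.
  intros Hx. apply Rlt_le_trans with (T (x + 1)); [apply increasing_T_lt; lra|].
  apply (is_lim_p_infty_ge T 1 (T (x + 1)) (x + 1) T_lim).
  intros y Hy. destruct Hy as [Hy|<-]; [left; apply increasing_T_lt; lra| lra].
Qed.

Lemma increasing_T_le_inv x y : 0 <= x -> 0 <= y -> T x <= T y -> x <= y.
Proof.
  intros Hx Hy Hle. apply Rnot_lt_le. intros Hlt.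
  pose proof (increasing_T_lt y x Hy Hlt). lra.
Qed.

Lemma preimage_spec t : T 0 <= t < 1 -> 0 <= preimage T t /\ T (preimage T t) = t.
Proof.
  intros Ht. apply (epsilon_spec (inhabits 0) (fun x => 0 <= x /\ T x = t)).
  destruct (is_lim_p_infty_eps T 1 T_lim (1 - t) ltac:(lra)) as [M HM].
  set (b := Rmax M 0 + 1). pose proof (Rmax_l M 0). pose proof (Rmax_r M 0).
  specialize (HM b ltac:(unfold b; lra)). apply Rabs_lt_between in HM.
  assert (Hcont : continuity T) by (intros x; apply continuity_pt_is_derive with (P x), T_derive).
  destruct (IVT_gen T 0 b t Hcont) as [x [Hx HTx]].
  - rewrite Rmin_left, Rmax_right by (left; apply increasing_T_lt; unfold b; lra). lra.
  - rewrite Rmin_left, Rmax_right in Hx by (unfold b; lra). exists x. split; [lra| exact HTx].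
Qed.

Lemma preimage_derive t : T 0 < t < 1 -> is_derive (preimage T) t (1 / P (preimage T t)).
Proof.
  intros Ht.
  set (lb := (T 0 + t) / 2). set (ub := (t + 1) / 2).
  assert (Hspec : forall u, lb <= u <= ub -> 0 <= preimage T u /\ T (preimage T u) = u)
    by (intros u Hu; apply preimage_spec; unfold lb, ub in Hu; lra).
  assert (Hmono : forall u v, lb <= u -> u <= v -> v <= ub -> preimage T u <= preimage T v).
  { intros u v Hu Huv Hv. destruct (Hspec u ltac:(lra)), (Hspec v ltac:(lra)).
    apply increasing_T_le_inv; auto. lra. }
  assert (Hcont : continuity_pt (preimage T) t).
  { set (b := preimage T ub). destruct (Hspec ub ltac:(unfold lb, ub; lra)) as [Hb HTb].
    fold b in Hb, HTb.
    assert (Hb0 : 0 < b).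
    { destruct Hb as [Hb|Hb]; [exact Hb|]. rewrite <- Hb in HTb.
      unfold ub in HTb. lra. }
    apply (continuity_pt_recip_interv T (preimage T) 0 b Hb0).
    - intros x y Hx Hxy _. apply increasing_T_lt; lra.
    - intros u Hu1 Hu2. unfold comp, id. apply preimage_spec.
      rewrite HTb in Hu2. unfold ub in Hu2. lra.
    - intros u Hu1 Hu2. rewrite HTb in Hu2.
      destruct (preimage_spec u ltac:(unfold ub in Hu2; lra)) as [Hu HTu].
      split; [exact Hu|]. apply increasing_T_le_inv; auto. lra.
    - intros a _. apply continuity_pt_is_derive with (P a), T_derive.
    - rewrite HTb. unfold ub. lra. }
  set (Prf := fun (z : R) (_ : preimage T lb <= z <= preimage T ub) =>
                exist (fun l => derivable_pt_abs T z l) (P z)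
                  (proj1 (is_derive_Reals T z (P z)) (T_derive z))).
  assert (Hincr : preimage T lb <= preimage T t <= preimage T ub)
    by (split; apply Hmono; unfold lb, ub; lra).
  apply is_derive_Reals.
  apply (derivable_pt_lim_recip_interv T (preimage T) lb ub t Prf Hcont
           ltac:(unfold lb, ub; lra) ltac:(unfold lb, ub; lra) Hincr).
  - intros u Hu. apply Hspec, Hu.
  - simpl. assert (0 < P (preimage T t)) by (apply P_pos, preimage_spec; lra). lra.
Qed.

End IncreasingInverse.

(** * Picard iteration for T'' = F(T, T') *)

Lemma continuity_pt_uniform_limit_Rmax (f : nat -> R -> R) (fl : R -> R) (C lam : R) :
  0 <= lam -> (forall n x, continuous (f n) x) ->
  (forall n x, 0 <= x -> Rabs (fl x - f n x) <= C * exp (lam * x) * (/2)^n) ->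
  forall s0, continuity_pt (fun s => fl (Rmax s 0)) s0.
Proof.
  intros Hlam Hc Hb s0 eps He.
  set (X := Rabs s0 + 1).
  destruct (geometric_half_lt (C * exp (lam * X)) (eps / 3) ltac:(lra)) as [N HN].
  specialize (HN N (le_n N)).
  assert (HfN : continuity_pt (fun s => f N (Rmax s 0)) s0).
  { apply (continuity_pt_comp (fun s => Rmax s 0) (f N));
      [apply continuity_pt_Rmax_0 | apply continuity_pt_filterlim, Hc]. }
  destruct (continuity_pt_eps _ _ HfN (eps / 3) ltac:(lra)) as [d [Hd Hnear]].
  exists (Rmin d 1). split; [apply Rmin_pos; lra|].
  intros y [_ Hy]. simpl in *. unfold R_dist in *.
  pose proof (Rmin_l d 1). pose proof (Rmin_r d 1).
  specialize (Hnear y ltac:(lra)).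
  assert (HC : 0 <= C).
  { specialize (Hb O 0 (Rle_refl 0)). pose proof (Rabs_pos (fl 0 - f O 0)).
    rewrite Rmult_0_r, exp_0, pow_O in Hb. lra. }
  assert (Hmono : forall z, 0 <= z <= X -> C * exp (lam * z) * (/2)^N <= C * exp (lam * X) * (/2)^N).
  { intros z Hz. apply Rmult_le_compat_r; [apply pow_le; lra|].
    apply Rmult_le_compat_l; [lra|]. apply exp_le_of_le. nra. }
  pose proof (Rabs_pos s0). pose proof (RRle_abs s0). apply Rabs_lt_between in Hy.
  assert (Hy0 : 0 <= Rmax y 0 <= X) by (split; [apply Rmax_r| apply Rmax_lub]; unfold X; lra).
  assert (Hs0 : 0 <= Rmax s0 0 <= X) by (split; [apply Rmax_r| apply Rmax_lub]; unfold X; lra).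
  pose proof (Hb N _ (proj1 Hy0)). pose proof (Hb N _ (proj1 Hs0)).
  pose proof (Hmono _ Hy0). pose proof (Hmono _ Hs0).
  replace (fl (Rmax y 0) - fl (Rmax s0 0)) with
    ((fl (Rmax y 0) - f N (Rmax y 0)) + (f N (Rmax y 0) - f N (Rmax s0 0))
     - (fl (Rmax s0 0) - f N (Rmax s0 0))) by ring.
  eapply Rle_lt_trans; [apply Rabs_triang|]. rewrite Rabs_Ropp.
  eapply Rle_lt_trans; [apply Rplus_le_compat_r, Rabs_triang|]. lra.
Qed.

Section SecondOrderPicard.
Variables (F : R -> R -> R) (L t0 p0 : R).
Hypothesis L_nonneg : 0 <= L.
Hypothesis F_lipschitz : forall t p t' p',
  Rabs (F t p - F t' p') <= L * (Rabs (t - t') + Rabs (p - p')).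

Lemma continuity_pt_F_comp (T P : R -> R) x :
  continuity_pt T x -> continuity_pt P x -> continuity_pt (fun s => F (T s) (P s)) x.
Proof.
  intros HT HP eps He.
  set (e := eps / (2 * (L + 1))).
  assert (He' : 0 < e) by (apply Rdiv_lt_0_compat; lra).
  assert (Heps : eps = 2 * e * (L + 1)) by (unfold e; field; lra).
  destruct (continuity_pt_eps T x HT e He') as [d1 [Hd1 H1]].
  destruct (continuity_pt_eps P x HP e He') as [d2 [Hd2 H2]].
  exists (Rmin d1 d2). split; [apply Rmin_pos; lra|].
  intros y [_ Hy]. simpl in *. unfold R_dist in *.
  specialize (H1 y ltac:(pose proof (Rmin_l d1 d2); lra)).
  specialize (H2 y ltac:(pose proof (Rmin_r d1 d2); lra)).
  eapply Rle_lt_trans; [apply F_lipschitz|]. nra.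
Qed.

(* [S] is the interface flux of Defs, hence [Datatypes.S]. *)
Fixpoint picard (n : nat) : (R -> R) * (R -> R) :=
  match n with
  | O => (fun _ => t0, fun _ => p0)
  | Datatypes.S m =>
      (fun x => t0 + RInt (snd (picard m)) 0 x,
       fun x => p0 + RInt (fun s => F (fst (picard m) s) (snd (picard m) s)) 0 x)
  end.

Definition picard_T n := fst (picard n).
Definition picard_P n := snd (picard n).

Lemma picard_continuous n :
  (forall x, continuous (picard_T n) x) /\ (forall x, continuous (picard_P n) x).
Proof.
  induction n as [|n [IHT IHP]].
  - split; intros x; apply continuous_const.
  - assert (HF : forall y, continuous (fun s => F (picard_T n s) (picard_P n s)) y)
      by (intros y; apply continuity_pt_filterlim, continuity_pt_F_comp;
          apply continuity_pt_filterlim; [apply IHT | apply IHP]).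
    split; intros x; simpl.
    + apply (ex_derive_continuous (fun x => t0 + RInt (picard_P n) 0 x)).
      eexists. apply is_derive_const_plus_RInt, IHP.
    + apply (ex_derive_continuous
               (fun x => p0 + RInt (fun s => F (picard_T n s) (picard_P n s)) 0 x)).
      eexists. apply is_derive_const_plus_RInt, HF.
Qed.

Lemma picard_T_derive n x : is_derive (picard_T (Nat.succ n)) x (picard_P n x).
Proof. apply is_derive_const_plus_RInt, picard_continuous. Qed.

Lemma picard_P_derive n x :
  is_derive (picard_P (Nat.succ n)) x (F (picard_T n x) (picard_P n x)).
Proof.
  apply (is_derive_const_plus_RInt p0 (fun s => F (picard_T n s) (picard_P n s))).
  intros y. apply continuity_pt_filterlim, continuity_pt_F_comp;
    apply continuity_pt_filterlim; apply picard_continuous.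
Qed.

Lemma picard_at_0 n : picard_T n 0 = t0 /\ picard_P n 0 = p0.
Proof. destruct n; simpl; [auto| split; apply const_plus_RInt_0]. Qed.

(* The rate 2 (1 + L) makes each iteration halve the weighted gap. *)
Definition picard_rate := 2 * (1 + L).
Definition picard_gap0 := (Rabs p0 + Rabs (F t0 p0)) / picard_rate.

Lemma picard_rate_pos : 0 < picard_rate.
Proof. unfold picard_rate. lra. Qed.

Lemma picard_gap0_nonneg : 0 <= picard_gap0.
Proof.
  unfold picard_gap0. pose proof picard_rate_pos.
  pose proof (Rabs_pos p0). pose proof (Rabs_pos (F t0 p0)).
  apply Rdiv_le_0_compat; lra.
Qed.

Definition picard_gap n x :=
  Rabs (picard_T (Nat.succ n) x - picard_T n x) + Rabs (picard_P (Nat.succ n) x - picard_P n x).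

Lemma picard_gap_0_le x : 0 <= x -> picard_gap 0 x <= picard_gap0 * exp (picard_rate * x).
Proof.
  intros Hx. pose proof picard_rate_pos.
  assert (Hexp : forall s, 0 <= s -> 1 <= exp (picard_rate * s))
    by (intros s Hs; rewrite <- exp_0; apply exp_le_of_le; nra).
  assert (HT : Rabs (picard_T 1 x - picard_T 0 x) <= Rabs p0 / picard_rate * exp (picard_rate * x)).
  { apply (Rabs_le_exp_of_is_derive (fun s => picard_T 1 s - picard_T 0 s) (fun _ => p0)); auto.
    - destruct (picard_at_0 1), (picard_at_0 0). lra.
    - intros s _. replace p0 with (p0 - 0) by ring.
      apply (is_derive_minus (picard_T 1) (fun _ => t0)); [apply (picard_T_derive 0)|].
      apply (@is_derive_const R_AbsRing R_NormedModule).
    - intros s Hs. pose proof (Hexp s (proj1 Hs)). pose proof (Rabs_pos p0). nra. }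
  assert (HP : Rabs (picard_P 1 x - picard_P 0 x)
               <= Rabs (F t0 p0) / picard_rate * exp (picard_rate * x)).
  { apply (Rabs_le_exp_of_is_derive (fun s => picard_P 1 s - picard_P 0 s) (fun _ => F t0 p0));
      auto.
    - destruct (picard_at_0 1), (picard_at_0 0). lra.
    - intros s _. replace (F t0 p0) with (F t0 p0 - 0) by ring.
      apply (is_derive_minus (picard_P 1) (fun _ => p0)); [apply (picard_P_derive 0)|].
      apply (@is_derive_const R_AbsRing R_NormedModule).
    - intros s Hs. pose proof (Hexp s (proj1 Hs)). pose proof (Rabs_pos (F t0 p0)). nra. }
  unfold picard_gap, picard_gap0. change (Nat.succ 0) with 1%nat.
  replace ((Rabs p0 + Rabs (F t0 p0)) / picard_rate * exp (picard_rate * x)) with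
    (Rabs p0 / picard_rate * exp (picard_rate * x)
     + Rabs (F t0 p0) / picard_rate * exp (picard_rate * x)) by (field; lra).
  lra.
Qed.

Lemma picard_gap_succ_le n C x : 0 <= x ->
  (forall s, 0 <= s <= x -> picard_gap n s <= C * exp (picard_rate * s)) ->
  picard_gap (Nat.succ n) x <= C / 2 * exp (picard_rate * x).
Proof.
  intros Hx Hgap. pose proof picard_rate_pos.
  assert (HT : Rabs (picard_T (Nat.succ (Nat.succ n)) x - picard_T (Nat.succ n) x)
               <= C / picard_rate * exp (picard_rate * x)).
  { apply (Rabs_le_exp_of_is_derive
             (fun s => picard_T (Nat.succ (Nat.succ n)) s - picard_T (Nat.succ n) s)
             (fun s => picard_P (Nat.succ n) s - picard_P n s)); auto.
    - destruct (picard_at_0 (Nat.succ (Nat.succ n))), (picard_at_0 (Nat.succ n)). lra.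
    - intros s _. apply (is_derive_minus (picard_T (Nat.succ (Nat.succ n))));
        apply picard_T_derive.
    - intros s Hs. specialize (Hgap s Hs). unfold picard_gap in Hgap.
      pose proof (Rabs_pos (picard_T (Nat.succ n) s - picard_T n s)). lra. }
  assert (HP : Rabs (picard_P (Nat.succ (Nat.succ n)) x - picard_P (Nat.succ n) x)
               <= L * C / picard_rate * exp (picard_rate * x)).
  { apply (Rabs_le_exp_of_is_derive
             (fun s => picard_P (Nat.succ (Nat.succ n)) s - picard_P (Nat.succ n) s)
             (fun s => F (picard_T (Nat.succ n) s) (picard_P (Nat.succ n) s)
                       - F (picard_T n s) (picard_P n s))); auto.
    - destruct (picard_at_0 (Nat.succ (Nat.succ n))), (picard_at_0 (Nat.succ n)). lra.
    - intros s _. apply (is_derive_minus (picard_P (Nat.succ (Nat.succ n))));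
        apply picard_P_derive.
    - intros s Hs. eapply Rle_trans; [apply F_lipschitz|].
      rewrite Rmult_assoc. apply Rmult_le_compat_l; [lra| exact (Hgap s Hs)]. }
  unfold picard_gap.
  replace (C / 2 * exp (picard_rate * x)) with
    (C / picard_rate * exp (picard_rate * x) + L * C / picard_rate * exp (picard_rate * x))
    by (unfold picard_rate; field; lra).
  lra.
Qed.

Lemma picard_gap_le n x : 0 <= x ->
  picard_gap n x <= picard_gap0 * (/2)^n * exp (picard_rate * x).
Proof.
  revert x. induction n as [|n IH]; intros x Hx.
  - rewrite pow_O, Rmult_1_r. apply picard_gap_0_le, Hx.
  - rewrite <- tech_pow_Rmult.
    replace (picard_gap0 * (/ 2 * (/ 2) ^ n)) with (picard_gap0 * (/ 2) ^ n / 2) by field.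
    apply picard_gap_succ_le; [exact Hx|]. intros s Hs. apply IH. lra.
Qed.

Lemma picard_tail_le n m x : 0 <= x -> (n <= m)%nat ->
  Rabs (picard_T m x - picard_T n x) + Rabs (picard_P m x - picard_P n x)
  <= 2 * picard_gap0 * exp (picard_rate * x) * ((/2)^n - (/2)^m).
Proof.
  intros Hx Hnm. induction Hnm as [|m Hnm IH].
  - rewrite !Rminus_diag, Rabs_R0. lra.
  - fold (Nat.succ m).
    pose proof (picard_gap_le m x Hx) as Hgap. unfold picard_gap in Hgap.
    pose proof (Rabs_triang (picard_T (Nat.succ m) x - picard_T m x) (picard_T m x - picard_T n x)).
    pose proof (Rabs_triang (picard_P (Nat.succ m) x - picard_P m x) (picard_P m x - picard_P n x)).
    replace (picard_T (Nat.succ m) x - picard_T m x + (picard_T m x - picard_T n x))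
      with (picard_T (Nat.succ m) x - picard_T n x) in * by ring.
    replace (picard_P (Nat.succ m) x - picard_P m x + (picard_P m x - picard_P n x))
      with (picard_P (Nat.succ m) x - picard_P n x) in * by ring.
    replace (2 * picard_gap0 * exp (picard_rate * x) * ((/ 2) ^ n - (/ 2) ^ Nat.succ m)) with
      (2 * picard_gap0 * exp (picard_rate * x) * ((/ 2) ^ n - (/ 2) ^ m)
       + picard_gap0 * (/2)^m * exp (picard_rate * x)) by (simpl; field).
    lra.
Qed.

Lemma picard_tail_le_geometric n m x : 0 <= x -> (n <= m)%nat ->
  Rabs (picard_T m x - picard_T n x) + Rabs (picard_P m x - picard_P n x)
  <= 2 * picard_gap0 * exp (picard_rate * x) * (/2)^n.
Proof.
  intros Hx Hnm. eapply Rle_trans; [apply picard_tail_le; auto|].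
  apply Rmult_le_compat_l.
  - pose proof picard_gap0_nonneg. pose proof (exp_pos (picard_rate * x)). nra.
  - pose proof (pow_le (/2) m ltac:(lra)). lra.
Qed.

Lemma picard_cauchy x : 0 <= x ->
  ex_finite_lim_seq (fun n => picard_T n x) /\ ex_finite_lim_seq (fun n => picard_P n x).
Proof.
  intros Hx.
  assert (Htail : forall eps : posreal, exists N, forall n m, (N <= n)%nat -> (N <= m)%nat ->
            Rabs (picard_T n x - picard_T m x) + Rabs (picard_P n x - picard_P m x) < eps).
  { intros eps.
    destruct (geometric_half_lt (4 * picard_gap0 * exp (picard_rate * x)) eps (cond_pos eps))
      as [N HN].
    exists N. intros n m Hn Hm. specialize (HN N (le_n N)).
    pose proof (picard_tail_le_geometric N n x Hx Hn).
    pose proof (picard_tail_le_geometric N m x Hx Hm).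
    pose proof (Rabs_triang (picard_T n x - picard_T N x) (picard_T N x - picard_T m x)).
    pose proof (Rabs_triang (picard_P n x - picard_P N x) (picard_P N x - picard_P m x)).
    rewrite <- (Rabs_Ropp (picard_T N x - picard_T m x)), <- (Rabs_Ropp (picard_P N x - picard_P m x))
      in *.
    replace (picard_T n x - picard_T N x + (picard_T N x - picard_T m x))
      with (picard_T n x - picard_T m x) in * by ring.
    replace (picard_P n x - picard_P N x + (picard_P N x - picard_P m x))
      with (picard_P n x - picard_P m x) in * by ring.
    replace (- (picard_T N x - picard_T m x)) with (picard_T m x - picard_T N x) in * by ring.
    replace (- (picard_P N x - picard_P m x)) with (picard_P m x - picard_P N x) in * by ring.
    lra. }
  split; apply ex_lim_seq_cauchy_corr; intros eps; destruct (Htail eps) as [N HN];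
    exists N; intros n m Hn Hm; specialize (HN n m Hn Hm).
  - pose proof (Rabs_pos (picard_P n x - picard_P m x)). lra.
  - pose proof (Rabs_pos (picard_T n x - picard_T m x)). lra.
Qed.

Definition picard_T_lim x := real (Lim_seq (fun n => picard_T n x)).
Definition picard_P_lim x := real (Lim_seq (fun n => picard_P n x)).

Lemma picard_lim_gap n x : 0 <= x ->
  Rabs (picard_T_lim x - picard_T n x) + Rabs (picard_P_lim x - picard_P n x)
  <= 2 * picard_gap0 * exp (picard_rate * x) * (/2)^n.
Proof.
  intros Hx. destruct (picard_cauchy x Hx) as [[lT HT] [lP HP]].
  unfold picard_T_lim, picard_P_lim.
  rewrite (is_lim_seq_unique _ _ HT), (is_lim_seq_unique _ _ HP). simpl.
  apply (is_lim_seq_le_loc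
           (fun m => Rabs (picard_T m x - picard_T n x) + Rabs (picard_P m x - picard_P n x))
           (fun _ => 2 * picard_gap0 * exp (picard_rate * x) * (/2)^n)
           (Rabs (lT - picard_T n x) + Rabs (lP - picard_P n x))
           (2 * picard_gap0 * exp (picard_rate * x) * (/2)^n)).
  - exists n. intros m Hm. apply picard_tail_le_geometric; auto.
  - apply is_lim_seq_plus'; apply (is_lim_seq_abs _ (_ - _));
      apply is_lim_seq_minus'; auto; apply is_lim_seq_const.
  - apply is_lim_seq_const.
Qed.

Lemma continuity_pt_picard_T_lim s : continuity_pt (fun s => picard_T_lim (Rmax s 0)) s.
Proof.
  apply (continuity_pt_uniform_limit_Rmax picard_T picard_T_lim
           (2 * picard_gap0) picard_rate); [left; apply picard_rate_pos| apply picard_continuous|].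
  intros n x Hx. pose proof (picard_lim_gap n x Hx).
  pose proof (Rabs_pos (picard_P_lim x - picard_P n x)). lra.
Qed.

Lemma continuity_pt_picard_P_lim s : continuity_pt (fun s => picard_P_lim (Rmax s 0)) s.
Proof.
  apply (continuity_pt_uniform_limit_Rmax picard_P picard_P_lim
           (2 * picard_gap0) picard_rate); [left; apply picard_rate_pos| apply picard_continuous|].
  intros n x Hx. pose proof (picard_lim_gap n x Hx).
  pose proof (Rabs_pos (picard_T_lim x - picard_T n x)). lra.
Qed.

(* Freezing the right-hand side at x = 0 for x < 0 keeps the solution differentiable on
   all of R, while the estimates above only hold for x >= 0. *)
Definition picard_rhs s := F (picard_T_lim (Rmax s 0)) (picard_P_lim (Rmax s 0)).
Definition picard_P_sol x := p0 + RInt picard_rhs 0 x.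
Definition picard_T_sol x := t0 + RInt picard_P_sol 0 x.

Lemma picard_P_sol_derive x : is_derive picard_P_sol x (picard_rhs x).
Proof.
  apply is_derive_const_plus_RInt. intros y.
  apply continuity_pt_filterlim, continuity_pt_F_comp;
    [apply continuity_pt_picard_T_lim | apply continuity_pt_picard_P_lim].
Qed.

Lemma picard_T_sol_derive x : is_derive picard_T_sol x (picard_P_sol x).
Proof.
  apply is_derive_const_plus_RInt. intros y.
  apply (ex_derive_continuous picard_P_sol). eexists. apply picard_P_sol_derive.
Qed.

Lemma picard_P_sol_eq x : 0 <= x -> picard_P_sol x = picard_P_lim x.
Proof.
  intros Hx. pose proof picard_rate_pos. pose proof picard_gap0_nonneg.
  set (e := exp (picard_rate * x)).
  apply Rminus_diag_uniq.
  apply (eq_0_of_Rabs_le_geometric (2 * L * picard_gap0 / picard_rate * e + picard_gap0 * e)).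
  intros n.
  assert (Hsol : Rabs (picard_P_sol x - picard_P (Nat.succ n) x)
                 <= 2 * L * picard_gap0 * (/2)^n / picard_rate * e).
  { apply (Rabs_le_exp_of_is_derive (fun s => picard_P_sol s - picard_P (Nat.succ n) s)
             (fun s => picard_rhs s - F (picard_T n s) (picard_P n s))); auto.
    - unfold picard_P_sol. rewrite const_plus_RInt_0. destruct (picard_at_0 (Nat.succ n)). lra.
    - intros s _. apply (is_derive_minus picard_P_sol);
        [apply picard_P_sol_derive | apply picard_P_derive].
    - intros s Hs. unfold picard_rhs. rewrite Rmax_left by lra.
      eapply Rle_trans; [apply F_lipschitz|].
      replace (2 * L * picard_gap0 * (/ 2) ^ n * exp (picard_rate * s))
        with (L * (2 * picard_gap0 * exp (picard_rate * s) * (/ 2) ^ n)) by ring.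
      apply Rmult_le_compat_l; [lra| apply picard_lim_gap; lra]. }
  assert (Hlim := picard_lim_gap (Nat.succ n) x Hx). fold e in Hlim.
  pose proof (Rabs_pos (picard_T_lim x - picard_T (Nat.succ n) x)).
  pose proof (Rabs_triang (picard_P_sol x - picard_P (Nat.succ n) x)
                (picard_P (Nat.succ n) x - picard_P_lim x)).
  rewrite (Rabs_minus_sym (picard_P_lim x)) in Hlim.
  replace (picard_P_sol x - picard_P (Nat.succ n) x + (picard_P (Nat.succ n) x - picard_P_lim x))
    with (picard_P_sol x - picard_P_lim x) in * by ring.
  unfold Nat.succ in *. simpl pow in Hlim.
  replace ((2 * L * picard_gap0 / picard_rate * e + picard_gap0 * e) * (/ 2) ^ n) with
    (2 * L * picard_gap0 * (/2)^n / picard_rate * e + 2 * picard_gap0 * e * (/ 2 * (/ 2) ^ n))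
    by (field; lra).
  lra.
Qed.

Lemma picard_T_sol_eq x : 0 <= x -> picard_T_sol x = picard_T_lim x.
Proof.
  intros Hx. pose proof picard_rate_pos. pose proof picard_gap0_nonneg.
  set (e := exp (picard_rate * x)).
  apply Rminus_diag_uniq.
  apply (eq_0_of_Rabs_le_geometric (2 * picard_gap0 / picard_rate * e + picard_gap0 * e)).
  intros n.
  assert (Hsol : Rabs (picard_T_sol x - picard_T (Nat.succ n) x)
                 <= 2 * picard_gap0 * (/2)^n / picard_rate * e).
  { apply (Rabs_le_exp_of_is_derive (fun s => picard_T_sol s - picard_T (Nat.succ n) s)
             (fun s => picard_P_sol s - picard_P n s)); auto.
    - unfold picard_T_sol. rewrite const_plus_RInt_0. destruct (picard_at_0 (Nat.succ n)). lra.
    - intros s _. apply (is_derive_minus picard_T_sol);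
        [apply picard_T_sol_derive | apply picard_T_derive].
    - intros s Hs. rewrite picard_P_sol_eq by lra.
      pose proof (picard_lim_gap n s ltac:(lra)).
      pose proof (Rabs_pos (picard_T_lim s - picard_T n s)). lra. }
  assert (Hlim := picard_lim_gap (Nat.succ n) x Hx). fold e in Hlim.
  pose proof (Rabs_pos (picard_P_lim x - picard_P (Nat.succ n) x)).
  pose proof (Rabs_triang (picard_T_sol x - picard_T (Nat.succ n) x)
                (picard_T (Nat.succ n) x - picard_T_lim x)).
  rewrite (Rabs_minus_sym (picard_T_lim x)) in Hlim.
  replace (picard_T_sol x - picard_T (Nat.succ n) x + (picard_T (Nat.succ n) x - picard_T_lim x))
    with (picard_T_sol x - picard_T_lim x) in * by ring.
  unfold Nat.succ in *. simpl pow in Hlim.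
  replace ((2 * picard_gap0 / picard_rate * e + picard_gap0 * e) * (/ 2) ^ n) with
    (2 * picard_gap0 * (/2)^n / picard_rate * e + 2 * picard_gap0 * e * (/ 2 * (/ 2) ^ n))
    by (field; lra).
  lra.
Qed.

Theorem second_order_global_solution : exists T P : R -> R,
  (forall x, is_derive T x (P x)) /\
  (forall x, is_derive P x (F (T (Rmax x 0)) (P (Rmax x 0)))) /\
  T 0 = t0 /\ P 0 = p0.
Proof.
  exists picard_T_sol, picard_P_sol.
  split; [apply picard_T_sol_derive|]. split.
  - intros x. pose proof (Rmax_r x 0).
    rewrite picard_T_sol_eq, picard_P_sol_eq by lra. apply picard_P_sol_derive.
  - split; apply const_plus_RInt_0.
Qed.

End SecondOrderPicard.

(** * The front equation *)

(* The front equation theta'' + eta c theta' = - Psi(theta) on x > 0, written as a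
   first order system for (T, P) = (theta, theta') with k = - eta c. *)
Definition solves (G : R -> R) (k : R) (T P : R -> R) :=
  (forall x, is_derive T x (P x)) /\ (forall x, ex_derive P x) /\
  (forall x, 0 < x -> is_derive P x (k * P x - G (T x))).

Section Solution.
Variables (G : R -> R) (k : R) (T P : R -> R).
Hypothesis sol : solves G k T P.

Lemma solves_continuity_T x : continuity_pt T x.
Proof. destruct sol as [HT _]. exact (continuity_pt_is_derive T x _ (HT x)). Qed.

Lemma solves_continuity_P x : continuity_pt P x.
Proof. destruct sol as [_ [HP _]]. exact (continuity_pt_ex_derive P x (HP x)). Qed.

Lemma solves_T_le x y : x <= y -> (forall s, x < s < y -> 0 <= P s) -> T x <= T y.
Proof.
  intros Hxy HP. apply (le_of_is_derive_nonneg T P); auto.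
  - intros s _. apply sol.
  - intros s _. apply solves_continuity_T.
Qed.

Lemma solves_T_lt x y : x < y -> (forall s, x < s < y -> 0 < P s) -> T x < T y.
Proof.
  intros Hxy HP. apply (lt_of_is_derive_pos T P); auto.
  - intros s _. apply sol.
  - intros s _. apply solves_continuity_T.
Qed.

Lemma solves_T_ge x y : x <= y -> (forall s, x < s < y -> P s <= 0) -> T y <= T x.
Proof.
  intros Hxy HP. apply (le_of_is_derive_nonpos T P); auto.
  - intros s _. apply sol.
  - intros s _. apply solves_continuity_T.
Qed.

(* exp(-k x) P(x) has derivative - exp(-k x) G(T(x)). *)
Lemma solves_exp_P_nonincreasing : (forall t, 0 <= G t) -> forall x y, 0 <= x <= y ->
  exp (- k * y) * P y <= exp (- k * x) * P x.
Proof.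
  intros HG x y Hxy. destruct sol as [_ [HPex HP]].
  apply (le_of_is_derive_nonpos (fun s => exp (- k * s) * P s)
           (fun s => - (exp (- k * s) * G (T s)))); [| |lra|].
  - intros s Hs. specialize (HP s ltac:(lra)).
    assert (Hex : ex_derive P s) by (eexists; exact HP).
    auto_derive; [auto|]. change (fun y => P y) with P.
    rewrite (is_derive_unique P s _ HP). ring.
  - intros s _. apply continuity_pt_mult; [|apply solves_continuity_P].
    apply continuity_pt_ex_derive. auto_derive. exact I.
  - intros s _. pose proof (exp_pos (- k * s)). specialize (HG (T s)). nra.
Qed.

Lemma solves_P_neg_persists : (forall t, 0 <= G t) -> forall x y, 0 <= x <= y ->
  P x < 0 -> P y < 0.
Proof.
  intros HG x y Hxy Hx. pose proof (solves_exp_P_nonincreasing HG x y Hxy).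
  pose proof (exp_pos (- k * y)). pose proof (exp_pos (- k * x)). nra.
Qed.

Lemma solves_P_nonpos_persists : (forall t, 0 <= G t) -> forall x y, 0 <= x <= y ->
  P x <= 0 -> P y <= 0.
Proof.
  intros HG x y Hxy Hx. pose proof (solves_exp_P_nonincreasing HG x y Hxy).
  pose proof (exp_pos (- k * y)). pose proof (exp_pos (- k * x)). nra.
Qed.

End Solution.

Section TwoSolutions.
Variables (G : R -> R) (L k1 k2 : R) (T1 P1 T2 P2 : R -> R).
Hypothesis L_nonneg : 0 <= L.
Hypothesis G_lipschitz : forall u v, Rabs (G u - G v) <= L * Rabs (u - v).
Hypothesis sol1 : solves G k1 T1 P1.
Hypothesis sol2 : solves G k2 T2 P2.

Definition sq_dist s := (T1 s - T2 s)^2 + (P1 s - P2 s)^2.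

Definition sq_dist_derivative s :=
  2 * (T1 s - T2 s) * (P1 s - P2 s)
  + 2 * (P1 s - P2 s) * ((k1 * P1 s - G (T1 s)) - (k2 * P2 s - G (T2 s))).

Definition sq_dist_rate := 2 + 2 * Rabs k1 + L.

Lemma sq_dist_derive s : 0 < s -> is_derive sq_dist s (sq_dist_derivative s).
Proof.
  intros Hs. destruct sol1 as [HT1 [HP1ex HP1]], sol2 as [HT2 [HP2ex HP2]].
  unfold sq_dist, sq_dist_derivative.
  assert (E1 := is_derive_unique _ _ _ (HT1 s)). assert (E2 := is_derive_unique _ _ _ (HT2 s)).
  assert (E3 := is_derive_unique _ _ _ (HP1 s Hs)). assert (E4 := is_derive_unique _ _ _ (HP2 s Hs)).
  assert (X1 : ex_derive T1 s) by (eexists; apply HT1).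
  assert (X2 : ex_derive T2 s) by (eexists; apply HT2).
  auto_derive; [repeat split; auto|].
  change (fun y => T1 y) with T1. change (fun y => T2 y) with T2.
  change (fun y => P1 y) with P1. change (fun y => P2 y) with P2.
  rewrite E1, E2, E3, E4. ring.
Qed.

Lemma sq_dist_continuous s : continuity_pt sq_dist s.
Proof.
  unfold sq_dist.
  pose proof (solves_continuity_T _ _ _ _ sol1 s). pose proof (solves_continuity_P _ _ _ _ sol1 s).
  pose proof (solves_continuity_T _ _ _ _ sol2 s). pose proof (solves_continuity_P _ _ _ _ sol2 s).
  apply continuity_pt_plus; apply continuity_pt_mult; try apply continuity_pt_mult;
    try apply continuity_pt_minus; auto; apply continuity_pt_const; now intros ? ?.
Qed.

Lemma sq_dist_derivative_bound s :
  Rabs (sq_dist_derivative s) <= sq_dist_rate * sq_dist s + (k1 - k2)^2 * (P2 s)^2.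
Proof.
  unfold sq_dist_derivative, sq_dist, sq_dist_rate.
  set (dT := T1 s - T2 s). set (dP := P1 s - P2 s). set (dG := G (T1 s) - G (T2 s)).
  replace (2 * dT * dP + 2 * dP * (k1 * P1 s - G (T1 s) - (k2 * P2 s - G (T2 s)))) with
    (2 * dT * dP + 2 * k1 * dP ^ 2 + 2 * dP * ((k1 - k2) * P2 s) - 2 * dP * dG)
    by (unfold dP, dG; ring).
  assert (HA := Rabs_two_mul_le dT dP).
  assert (HB : Rabs (2 * k1 * dP ^ 2) <= 2 * Rabs k1 * dP ^ 2).
  { rewrite !Rabs_mult, (Rabs_right 2), (Rabs_right (dP ^ 2)) by (apply Rle_ge, pow2_ge_0 || lra).
    lra. }
  assert (HC := Rabs_two_mul_le dP ((k1 - k2) * P2 s)).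
  assert (HD : Rabs (2 * dP * dG) <= L * (dT ^ 2 + dP ^ 2)).
  { assert (HdG : Rabs dG <= L * Rabs dT) by apply G_lipschitz.
    pose proof (Rabs_pos dT). pose proof (Rabs_pos dP).
    pose proof (Rabs_two_mul_le (Rabs dT) (Rabs dP)) as Hmix. rewrite !pow2_abs in Hmix.
    rewrite Rabs_right in Hmix by (apply Rle_ge, Rmult_le_pos; [lra| assumption]).
    rewrite !Rabs_mult, (Rabs_right 2) by lra.
    apply Rle_trans with (2 * Rabs dP * (L * Rabs dT)); [apply Rmult_le_compat_l; lra|].
    replace (2 * Rabs dP * (L * Rabs dT)) with (L * (2 * Rabs dT * Rabs dP)) by ring.
    apply Rmult_le_compat_l; [exact L_nonneg| exact Hmix]. }
  apply Rabs_le_between in HA, HB, HC, HD. apply Rabs_le.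
  replace (((k1 - k2) * P2 s) ^ 2) with ((k1 - k2) ^ 2 * P2 s ^ 2) in HC by ring.
  pose proof (pow2_ge_0 dT). pose proof (pow2_ge_0 dP). pose proof (Rabs_pos k1).
  split; nra.
Qed.

Lemma solves_sq_dist_le B x : 0 <= x -> (forall s, 0 <= s <= x -> Rabs (P2 s) <= B) ->
  sq_dist x <= (sq_dist 0 + (k1 - k2)^2 * B^2) * exp (sq_dist_rate * x).
Proof.
  intros Hx HB.
  assert (Hrate : 1 <= sq_dist_rate) by (unfold sq_dist_rate; pose proof (Rabs_pos k1); lra).
  set (E := (k1 - k2)^2 * B^2).
  assert (HE : 0 <= E) by (apply Rmult_le_pos; apply pow2_ge_0).
  eapply Rle_trans.
  - apply (gronwall sq_dist sq_dist_derivative sq_dist_rate E x); [lra| auto| auto| | |].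
    + intros s Hs. apply sq_dist_derive. lra.
    + intros s _. apply sq_dist_continuous.
    + intros s Hs. pose proof (sq_dist_derivative_bound s) as Hd.
      assert (HP2 : (P2 s)^2 <= B^2).
      { specialize (HB s ltac:(lra)). rewrite <- (pow2_abs (P2 s)).
        pose proof (Rabs_pos (P2 s)). nra. }
      pose proof (pow2_ge_0 (k1 - k2)).
      apply Rabs_le_between in Hd. unfold E. nra.
  - apply Rmult_le_compat_r; [left; apply exp_pos|].
    enough (E / sq_dist_rate <= E) by lra.
    unfold Rdiv. rewrite <- (Rmult_1_r E) at 2. apply Rmult_le_compat_l; [exact HE|].
    rewrite <- Rinv_1. apply Rinv_le_contravar; lra.
Qed.

End TwoSolutions.

(* Gronwall backwards in time against the constant solution (1, 0), using G 1 = 0. *)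
Lemma solves_equilibrium_backward (G : R -> R) L k T P x1 :
  0 <= L -> (forall u v, Rabs (G u - G v) <= L * Rabs (u - v)) -> G 1 = 0 ->
  solves G k T P -> 0 < x1 -> T x1 = 1 -> P x1 = 0 -> T 0 = 1 /\ P 0 = 0.
Proof.
  intros HL HG HG1 sol Hx1 HT HP.
  assert (sol_eq : solves G k (fun _ => 1) (fun _ => 0)).
  { split; [|split].
    - intros x. apply (@is_derive_const R_AbsRing R_NormedModule).
    - intros x. eexists. apply (@is_derive_const R_AbsRing R_NormedModule).
    - intros x _. rewrite HG1, Rmult_0_r, Rminus_0_r.
      apply (@is_derive_const R_AbsRing R_NormedModule). }
  assert (Hw := gronwall_backward (sq_dist T P (fun _ => 1) (fun _ => 0))
                  (sq_dist_derivative G k k T P (fun _ => 1) (fun _ => 0))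
                  (sq_dist_rate L k) x1 ltac:(lra)).
  assert (Hw0 : sq_dist T P (fun _ => 1) (fun _ => 0) 0 <= 0).
  { eapply Rle_trans; [apply Hw|].
    - intros s Hs. apply (sq_dist_derive G k k); auto. lra.
    - intros s _. apply (sq_dist_continuous G k k); auto.
    - intros s Hs. pose proof (sq_dist_derivative_bound G L k k T P (fun _ => 1) (fun _ => 0)
                                 HL HG s) as Hd.
      rewrite Rminus_diag, pow_i, Rmult_0_l, Rplus_0_r in Hd by lia.
      apply Rabs_le_between in Hd. lra.
    - unfold sq_dist. rewrite HT, HP. right. ring. }
  unfold sq_dist in Hw0.
  pose proof (pow2_ge_0 (T 0 - 1)). pose proof (pow2_ge_0 (P 0 - 0)).
  split; nra.
Qed.

Section FrontLimits.
Variables (G : R -> R) (k : R) (T P : R -> R).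
Hypothesis sol : solves G k T P.
Hypothesis G_nonneg : forall t, 0 <= G t.
Hypothesis G_pos : forall t, t < 1 -> 0 < G t.
Hypothesis G_cont : forall t, continuity_pt G t.
Hypothesis k_nonneg : 0 <= k.
Hypothesis front : forall x, 0 <= x -> 0 < P x /\ T x < 1.

Lemma front_T_nondecreasing x y : 0 <= x <= y -> T x <= T y.
Proof.
  intros Hxy. apply (solves_T_le G k T P sol); [lra|]. intros s Hs. left. apply front. lra.
Qed.

Lemma front_energy_derive x : 0 < x -> is_derive (fun s => P s - k * T s) x (- G (T x)).
Proof.
  intros Hx. destruct sol as [HT [_ HP]].
  replace (- G (T x)) with (k * P x - G (T x) - k * P x) by ring.
  apply (is_derive_minus P (fun s => k * T s)); [apply HP, Hx|].
  apply (is_derive_scal T x k (P x)), HT.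
Qed.

Lemma front_energy_continuous x : continuity_pt (fun s => P s - k * T s) x.
Proof.
  apply continuity_pt_minus; [apply (solves_continuity_P G k T P sol)|].
  apply continuity_pt_mult; [apply continuity_pt_const; now intros ? ?|].
  apply (solves_continuity_T G k T P sol).
Qed.

Lemma front_energy_lower_bound x : 0 <= x -> - k < P x - k * T x.
Proof. intros Hx. destruct (front x Hx). nra. Qed.

(* If T tended to l < 1, then G(T) >= m > 0 would drive P - k T below its lower bound - k. *)
Lemma front_T_limit : is_lim T p_infty 1.
Proof.
  destruct (is_lim_p_infty_nondecreasing T 1 front_T_nondecreasing
              (fun x Hx => Rlt_le _ _ (proj2 (front x Hx)))) as [l [Hl Hle]].
  assert (Hl1 : l <= 1)
    by (apply (is_lim_p_infty_le T l 1 0 Hl); intros x Hx; left; apply front; lra).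
  destruct Hl1 as [Hl1|Hl1]; [exfalso| rewrite <- Hl1; exact Hl].
  destruct (continuity_ab_min G (T 0) l (Hle 0 (Rle_refl 0)) (fun t _ => G_cont t))
    as [tm [Hmin Htm]].
  set (m := G tm). assert (Hm : 0 < m) by (apply G_pos; lra).
  set (E := fun s => P s - k * T s).
  assert (Hdecay : forall x, 0 <= x -> E x + m * x <= E 0 + m * 0).
  { intros x Hx.
    apply (le_of_is_derive_nonpos (fun s => E s + m * s) (fun s => - G (T s) + m * 1)); auto.
    - intros s Hs. apply (is_derive_plus E (fun s => m * s)); [apply front_energy_derive; lra|].
      apply (is_derive_scal (fun s => s)), (@is_derive_id R_AbsRing).
    - intros s _. apply continuity_pt_plus; [apply front_energy_continuous|].
      apply continuity_pt_mult; [apply continuity_pt_const; now intros ? ?| apply continuity_pt_id].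
    - intros s Hs. enough (m <= G (T s)) by lra.
      apply Hmin. split; [apply front_T_nondecreasing| apply Hle]; lra. }
  set (x := (E 0 + k) / m + 1).
  assert (Hx : 0 <= x).
  { pose proof (front_energy_lower_bound 0 (Rle_refl 0)).
    assert (0 <= (E 0 + k) / m) by (apply Rdiv_le_0_compat; unfold E; lra). unfold x. lra. }
  specialize (Hdecay x Hx). pose proof (front_energy_lower_bound x Hx).
  assert (m * x = E 0 + k + m) by (unfold x; field; lra).
  unfold E in *. lra.
Qed.

Lemma front_P_limit : 0 <= T 0 -> is_lim P p_infty 0.
Proof.
  intros HT0. destruct sol as [HT [_ HP]].
  destruct (is_lim_p_infty_nonincreasing (fun s => P s - k * T s) (- k)) as [e He].
  { intros x y Hxy.
    apply (le_of_is_derive_nonpos (fun s => P s - k * T s) (fun s => - G (T s))); [| | lra|].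
    - intros s Hs. apply front_energy_derive. lra.
    - intros s _. apply front_energy_continuous.
    - intros s _. specialize (G_nonneg (T s)). lra. }
  { intros x Hx. left. apply front_energy_lower_bound, Hx. }
  assert (HPlim : is_lim P p_infty (e + k * 1)).
  { apply (is_lim_ext (fun s => (P s - k * T s) + k * T s)); [intros; ring|].
    apply (is_lim_plus _ _ p_infty e (k * 1)); [exact He| |easy].
    apply (is_lim_scal_l T k p_infty 1), front_T_limit. }
  replace 0 with (e + k * 1); [exact HPlim|].
  apply (bounded_derive_limit_0 T P (e + k * 1) 1); [intros; apply HT| exact HPlim|].
  intros x Hx. destruct (front x Hx) as [_ HTx].
  pose proof (front_T_nondecreasing 0 x ltac:(lra)). apply Rabs_le. lra.
Qed.

End FrontLimits.

(* Two fronts with rates k1 < k2 issued from the lines P = k_i (T - q), the slower one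
   starting colder, are compared in the phase plane at equal temperature. *)
Section Comparison.
Variables (G : R -> R) (k1 k2 q : R) (T1 P1 T2 P2 : R -> R).
Hypothesis G_pos : forall t, t < 1 -> 0 < G t.
Hypothesis k1_pos : 0 < k1.
Hypothesis k1_lt_k2 : k1 < k2.
Hypothesis sol1 : solves G k1 T1 P1.
Hypothesis sol2 : solves G k2 T2 P2.
Hypothesis T_0_lt : T1 0 < T2 0.
Hypothesis P1_0 : P1 0 = k1 * (T1 0 - q).
Hypothesis P2_0 : P2 0 = k2 * (T2 0 - q).
Hypothesis front1 : forall x, 0 <= x -> 0 < P1 x.
Hypothesis front2 : forall x, 0 <= x -> 0 < P2 x /\ T2 x < 1.
Hypothesis T1_lim : is_lim T1 p_infty 1.
Hypothesis P2_lim : is_lim P2 p_infty 0.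

Definition matched_time x := preimage T1 (T2 x).
Definition phase_gap x := P1 (matched_time x) / k1 - P2 x / k2.
Definition phase_gap_derivative x :=
  Derive P1 (matched_time x) * (P2 x * (1 / P1 (matched_time x))) / k1 - Derive P2 x / k2.

Lemma T2_range x : 0 <= x -> T1 0 < T2 x < 1.
Proof.
  intros Hx. split; [|apply front2, Hx].
  apply Rlt_le_trans with (T2 0); [exact T_0_lt|].
  apply (solves_T_le G k2 T2 P2 sol2); [exact Hx|]. intros s Hs. left. apply front2. lra.
Qed.

Lemma matched_time_spec x : 0 <= x -> 0 < matched_time x /\ T1 (matched_time x) = T2 x.
Proof.
  intros Hx. pose proof (T2_range x Hx).
  destruct (preimage_spec T1 P1 (proj1 sol1) front1 T1_lim (T2 x) ltac:(lra)) as [H0 HT].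
  split; [|exact HT]. destruct H0 as [H0|H0]; [exact H0|].
  unfold matched_time in HT. rewrite <- H0 in HT. lra.
Qed.

Lemma matched_time_derive x : 0 <= x ->
  is_derive matched_time x (P2 x * (1 / P1 (matched_time x))).
Proof.
  intros Hx. apply (is_derive_comp (preimage T1) T2).
  - apply (preimage_derive T1 P1 (proj1 sol1) front1 T1_lim). pose proof (T2_range x Hx). lra.
  - apply sol2.
Qed.

Lemma phase_gap_derive x : 0 <= x -> is_derive phase_gap x (phase_gap_derivative x).
Proof.
  intros Hx. unfold phase_gap, phase_gap_derivative.
  pose proof (matched_time_derive x Hx) as Hm.
  assert (Hmex : ex_derive matched_time x) by (eexists; exact Hm).
  destruct sol1 as [_ [HP1 _]], sol2 as [_ [HP2 _]].
  pose proof (HP1 (matched_time x)). pose proof (HP2 x).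
  auto_derive; [repeat split; auto|].
  change (fun y => matched_time y) with matched_time.
  change (fun y => P1 y) with P1. change (fun y => P2 y) with P2.
  rewrite (is_derive_unique _ _ _ Hm). field.
  pose proof (front1 (matched_time x) ltac:(pose proof (matched_time_spec x Hx); lra)).
  repeat split; lra.
Qed.

(* Where the trajectories are ordered as P1/k1 <= P2/k2, the gap decreases since
   k1^2 < k2^2. *)
Lemma phase_gap_derivative_neg x : 0 < x -> phase_gap x < 0 -> phase_gap_derivative x < 0.
Proof.
  intros Hx Hgap. destruct (matched_time_spec x ltac:(lra)) as [Hs HT].
  unfold phase_gap_derivative.
  rewrite (is_derive_unique _ _ _ (proj2 (proj2 sol1) _ Hs)),
          (is_derive_unique _ _ _ (proj2 (proj2 sol2) _ Hx)), HT.
  unfold phase_gap in Hgap.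
  set (p1 := P1 (matched_time x)) in *. set (p2 := P2 x) in *. set (g := G (T2 x)).
  assert (Hp1 : 0 < p1) by (apply front1; lra).
  assert (Hp2 : 0 < p2) by (apply front2; lra).
  assert (Hg : 0 < g) by (apply G_pos, front2; lra).
  replace ((k1 * p1 - g) * (p2 * (1 / p1)) / k1 - (k2 * p2 - g) / k2) with
    (g * (p1 * k1 - p2 * k2) / (k1 * k2 * p1)) by (field; repeat split; lra).
  assert (Hord : p1 * k2 < p2 * k1).
  { apply (Rmult_lt_compat_r (k1 * k2)) in Hgap; [|nra].
    replace ((p1 / k1 - p2 / k2) * (k1 * k2)) with (p1 * k2 - p2 * k1) in Hgap by (field; lra).
    lra. }
  assert (p1 * k1 - p2 * k2 < 0) by nra.
  apply Rdiv_neg_pos; [nra|]. apply Rmult_lt_0_compat; nra.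
Qed.

(* P1/k1 - T1 decreases along the first front and equals - q at x = 0. *)
Lemma phase_gap_0_neg : phase_gap 0 < 0.
Proof.
  destruct (matched_time_spec 0 (Rle_refl 0)) as [Hs HT].
  destruct sol1 as [HT1 [HP1ex HP1]].
  assert (HT1lt : forall x, 0 <= x -> T1 x < 1)
    by (intros; apply (increasing_T_lt_1 T1 P1 HT1 front1 T1_lim); auto).
  assert (Hdec : P1 (matched_time 0) / k1 - T1 (matched_time 0) < P1 0 / k1 - T1 0).
  { apply (lt_of_is_derive_neg (fun y => P1 y / k1 - T1 y) (fun y => - G (T1 y) / k1));
      [| |exact Hs|].
    - intros y Hy. pose proof (HP1 y ltac:(lra)) as HPy. pose proof (HP1ex y).
      assert (ex_derive T1 y) by (eexists; apply HT1).
      auto_derive; [repeat split; auto|].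
      change (fun z => P1 z) with P1. change (fun z => T1 z) with T1.
      rewrite (is_derive_unique _ _ _ HPy), (is_derive_unique _ _ _ (HT1 y)). field. lra.
    - intros y _. apply continuity_pt_minus.
      + apply continuity_pt_mult; [apply continuity_pt_ex_derive, HP1ex|].
        apply continuity_pt_const. now intros ? ?.
      + apply continuity_pt_is_derive with (P1 y), HT1.
    - intros y Hy. pose proof (G_pos (T1 y) (HT1lt y ltac:(lra))).
      apply Rdiv_neg_pos; lra. }
  unfold phase_gap. rewrite HT in Hdec. rewrite P1_0, P2_0 in *.
  replace (k1 * (T1 0 - q) / k1) with (T1 0 - q) in Hdec by (field; lra).
  replace (k2 * (T2 0 - q) / k2) with (T2 0 - q) by (field; lra).
  lra.
Qed.

Lemma phase_gap_eventually_gt : exists x1, 0 < x1 /\ phase_gap 0 < phase_gap x1.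
Proof.
  pose proof phase_gap_0_neg.
  destruct (is_lim_p_infty_eps P2 0 P2_lim (- k2 * phase_gap 0) ltac:(nra)) as [M HM].
  set (x1 := Rmax M 0 + 1). pose proof (Rmax_l M 0). pose proof (Rmax_r M 0).
  exists x1. split; [unfold x1; lra|].
  specialize (HM x1 ltac:(unfold x1; lra)). rewrite Rminus_0_r in HM.
  apply Rabs_lt_between in HM.
  destruct (matched_time_spec x1 ltac:(unfold x1; lra)) as [Hs _].
  assert (0 < P1 (matched_time x1) / k1) by (apply Rdiv_lt_0_compat; [apply front1|]; lra).
  assert (P2 x1 / k2 < - phase_gap 0).
  { apply (Rmult_lt_reg_r k2); [lra|].
    replace (P2 x1 / k2 * k2) with (P2 x1) by (field; lra). lra. }
  unfold phase_gap at 2. lra.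
Qed.

Lemma fronts_comparison : False.
Proof.
  destruct phase_gap_eventually_gt as [x1 [Hx1 Hgt]].
  assert (Hlt : phase_gap x1 < phase_gap 0).
  { apply (decreasing_while_negative phase_gap phase_gap_derivative 0 x1 Hx1).
    - intros x Hx. apply continuity_pt_is_derive with (phase_gap_derivative x), phase_gap_derive. lra.
    - intros x Hx. apply phase_gap_derive. lra.
    - intros x Hx. apply phase_gap_derivative_neg. lra.
    - exact phase_gap_0_neg. }
  lra.
Qed.

End Comparison.

(** * Shooting in the speed *)

Definition clamp01 x := Rmax 0 (Rmin x 1).

Lemma clamp01_range x : 0 <= clamp01 x <= 1.
Proof. unfold clamp01, Rmax, Rmin. destruct (Rle_dec x 1); destruct Rle_dec; lra. Qed.

Lemma clamp01_id x : 0 <= x <= 1 -> clamp01 x = x.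
Proof. intros H. unfold clamp01, Rmax, Rmin. destruct (Rle_dec x 1); destruct Rle_dec; lra. Qed.

Lemma clamp01_lt_1 x : x < 1 -> clamp01 x < 1.
Proof. intros H. unfold clamp01, Rmax, Rmin. destruct (Rle_dec x 1); destruct Rle_dec; lra. Qed.

Lemma clamp01_lipschitz u v : Rabs (clamp01 u - clamp01 v) <= Rabs (u - v).
Proof.
  unfold clamp01, Rmax, Rmin. destruct (Rle_dec u 1); destruct (Rle_dec v 1);
  repeat destruct Rle_dec; unfold Rabs; repeat destruct Rcase_abs; lra.
Qed.

Lemma smooth_lipschitz_01 (g : R -> R) : smooth_on_open (fun _ => True) g ->
  exists L, 0 <= L /\
    forall u v, 0 <= u <= 1 -> 0 <= v <= 1 -> Rabs (g u - g v) <= L * Rabs (u - v).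
Proof.
  intros Hs.
  assert (H1 : forall x, ex_derive g x) by (intros x; exact (Hs 1%nat x I)).
  assert (H2 : forall x, ex_derive (Derive g) x) by (intros x; exact (Hs 2%nat x I)).
  destruct (continuity_ab_maj (fun y => Rabs (Derive g y)) (-1) 2 ltac:(lra)) as [m [Hm _]].
  { intros y _. apply (continuity_pt_comp (Derive g) Rabs);
      [apply continuity_pt_ex_derive, H2| apply Rcontinuity_abs]. }
  exists (Rabs (Derive g m)). split; [apply Rabs_pos|].
  intros u v Hu Hv.
  apply (bounded_variation g (Derive g) _ v u). intros t Ht.
  split; [apply Derive_correct, H1|]. apply Hm.
  assert (Huv : Rabs (u - v) <= 1) by (apply Rabs_le; lra).
  apply Rabs_le_between in Ht; lra.
Qed.

(* On x < 0 the quantity theta' + c theta is constant and tends to 0 at - infinity. *)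
Lemma left_slope c theta thl : C2 thl -> (forall x, x <= 0 -> thl x = theta x) ->
  (forall x, x < 0 -> Derive (Derive thl) x + c * Derive thl x = 0) ->
  is_lim theta m_infty 0 -> is_lim (Derive thl) m_infty 0 -> Derive thl 0 = - c * theta 0.
Proof.
  intros [H1 [H2 _]] Hl Hode Hlim Hdlim.
  set (j := fun x => Derive thl x + c * thl x).
  assert (Hj : forall x, is_derive j x (Derive (Derive thl) x + c * Derive thl x)).
  { intros x. apply (is_derive_plus (Derive thl) (fun x => c * thl x));
      [apply Derive_correct, H2|].
    apply (is_derive_scal thl x c), Derive_correct, H1. }
  assert (Hconst : forall x, x <= 0 -> j x = j 0).
  { intros x Hx. apply (eq_of_is_derive_zero j (fun x => Derive (Derive thl) x + c * Derive thl x));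
      [intros; apply Hj| intros; apply continuity_pt_is_derive with (1 := Hj _)| lra|].
    intros s Hs. apply Hode. lra. }
  assert (Hjlim : is_lim j m_infty (0 + c * 0)).
  { apply (is_lim_plus _ _ m_infty 0 (c * 0)); [exact Hdlim| |easy].
    apply (is_lim_scal_l thl c m_infty 0).
    apply (is_lim_ext_loc theta); [|exact Hlim].
    exists 0. intros x Hx. symmetry. apply Hl. lra. }
  pose proof (is_lim_m_infty_eventually_const j (j 0) (0 + c * 0) Hconst Hjlim) as Hj0.
  unfold j in Hj0. rewrite Hl in Hj0 by lra. lra.
Qed.

Section Shooting.
Variables (eta Qg Qp : R) (Psi : R -> R) (cmax cmin : R) (thetas G : R -> R) (L : R).
Hypothesis eta_pos : 0 < eta.
Hypothesis Qg_pos : 0 < Qg.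
Hypothesis Qp_pos : 0 < Qp.
Hypothesis Psi_1 : Psi 1 = 0.
Hypothesis cmax_neg : cmax < 0.
Hypothesis thetas_range : forall c, cmax <= c <= 0 -> 0 <= thetas c <= 1.
Hypothesis thetas_cont : forall c, cmax <= c <= 0 ->
  filterlim thetas (within (fun y => cmax <= y <= 0) (locally c)) (locally (thetas c)).
Hypothesis thetas_decr : forall a b, cmax <= a -> a < b -> b <= 0 -> thetas b < thetas a.
Hypothesis thetas_cmax : thetas cmax = 1.
Hypothesis cmin_range : cmax < cmin < 0.
Hypothesis thetas_cmin : thetas cmin = Qp / (Qg + Qp).
Hypothesis L_nonneg : 0 <= L.
Hypothesis G_lipschitz : forall u v, Rabs (G u - G v) <= L * Rabs (u - v).
Hypothesis G_Psi : forall x, 0 <= x <= 1 -> G x = Psi x.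
Hypothesis G_nonneg : forall t, 0 <= G t.
Hypothesis G_pos : forall t, t < 1 -> 0 < G t.

Definition heat_ratio := Qp / (Qp + Qg).
Definition rate c := - eta * c.
(* With theta'(0^-) = - c theta(0), the interface condition reads
   theta'(0^+) = initial_slope c. *)
Definition initial_slope c := rate c * (thetas c - heat_ratio).

Lemma heat_ratio_range : 0 < heat_ratio < 1.
Proof.
  unfold heat_ratio. split; [apply Rdiv_lt_0_compat; lra|].
  apply (Rmult_lt_reg_r (Qp + Qg)); [lra|].
  replace (Qp / (Qp + Qg) * (Qp + Qg)) with Qp by (field; lra). lra.
Qed.

Lemma thetas_cmin_ratio : thetas cmin = heat_ratio.
Proof. rewrite thetas_cmin. unfold heat_ratio. f_equal. ring. Qed.

Lemma G_1 : G 1 = 0.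
Proof. rewrite G_Psi by lra. exact Psi_1. Qed.

Lemma G_continuous t : continuity_pt G t.
Proof.
  intros eps He. exists (eps / (L + 1)). split; [apply Rdiv_lt_0_compat; lra|].
  intros y [_ Hy]. simpl in *. unfold R_dist in *.
  eapply Rle_lt_trans; [apply G_lipschitz|].
  apply Rle_lt_trans with ((L + 1) * Rabs (y - t)); [pose proof (Rabs_pos (y - t)); nra|].
  apply (Rmult_lt_compat_l (L + 1)) in Hy; [|lra].
  replace ((L + 1) * (eps / (L + 1))) with eps in Hy by (field; lra). exact Hy.
Qed.

Definition front_rhs c t p := rate c * p - G t.

Lemma front_rhs_lipschitz c t p t' p' :
  Rabs (front_rhs c t p - front_rhs c t' p') <= (Rabs (rate c) + L) * (Rabs (t - t') + Rabs (p - p')).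
Proof.
  unfold front_rhs.
  replace (rate c * p - G t - (rate c * p' - G t')) with (rate c * (p - p') - (G t - G t')) by ring.
  eapply Rle_trans; [apply Rabs_triang|]. rewrite Rabs_Ropp, Rabs_mult.
  pose proof (G_lipschitz t t'). pose proof (Rabs_pos (rate c)).
  pose proof (Rabs_pos (t - t')). pose proof (Rabs_pos (p - p')). nra.
Qed.

Lemma shoot_exists c : {TP : (R -> R) * (R -> R) |
  (forall x, is_derive (fst TP) x (snd TP x)) /\
  (forall x, is_derive (snd TP) x (front_rhs c (fst TP (Rmax x 0)) (snd TP (Rmax x 0)))) /\
  fst TP 0 = thetas c /\ snd TP 0 = initial_slope c}.
Proof.
  apply constructive_indefinite_description.
  destruct (second_order_global_solution (front_rhs c) (Rabs (rate c) + L) (thetas c)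
              (initial_slope c)) as [T [P H]].
  - pose proof (Rabs_pos (rate c)). lra.
  - apply front_rhs_lipschitz.
  - exists (T, P). exact H.
Qed.

Definition shoot_T c := fst (proj1_sig (shoot_exists c)).
Definition shoot_P c := snd (proj1_sig (shoot_exists c)).

Lemma shoot_T_derive c x : is_derive (shoot_T c) x (shoot_P c x).
Proof. apply (proj2_sig (shoot_exists c)). Qed.

Lemma shoot_P_derive c x :
  is_derive (shoot_P c) x (front_rhs c (shoot_T c (Rmax x 0)) (shoot_P c (Rmax x 0))).
Proof. apply (proj2_sig (shoot_exists c)). Qed.

Lemma shoot_T_0 c : shoot_T c 0 = thetas c.
Proof. apply (proj2_sig (shoot_exists c)). Qed.

Lemma shoot_P_0 c : shoot_P c 0 = initial_slope c.
Proof. apply (proj2_sig (shoot_exists c)). Qed.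

Lemma shoot_solves c : solves G (rate c) (shoot_T c) (shoot_P c).
Proof.
  split; [apply shoot_T_derive| split].
  - intros x. eexists. apply shoot_P_derive.
  - intros x Hx. pose proof (shoot_P_derive c x) as H. rewrite Rmax_left in H by lra. exact H.
Qed.

Lemma shoot_T_continuous c x : continuity_pt (shoot_T c) x.
Proof. apply (solves_continuity_T G (rate c) _ (shoot_P c)), shoot_solves. Qed.

Lemma shoot_P_continuous c x : continuity_pt (shoot_P c) x.
Proof. apply (solves_continuity_P G (rate c) (shoot_T c)), shoot_solves. Qed.

Lemma initial_data_close c : cmax <= c <= 0 -> forall r, 0 < r ->
  exists d, 0 < d /\ forall c', cmax <= c' <= 0 -> Rabs (c' - c) < d ->
    Rabs (thetas c' - thetas c) < r /\ Rabs (rate c' - rate c) < r.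
Proof.
  intros Hc r Hr.
  destruct (within_continuity_eps thetas _ c (thetas_cont c Hc) r Hr) as [d [Hd Hnear]].
  exists (Rmin d (r / eta)). split; [apply Rmin_pos; [lra| apply Rdiv_lt_0_compat; lra]|].
  intros c' Hc' Hcc'. pose proof (Rmin_l d (r / eta)). pose proof (Rmin_r d (r / eta)).
  split; [apply Hnear; [exact Hc'| lra]|].
  unfold rate. replace (- eta * c' - - eta * c) with (- eta * (c' - c)) by ring.
  rewrite Rabs_mult, Rabs_Ropp, (Rabs_right eta) by lra.
  apply Rlt_le_trans with (eta * (r / eta)); [apply Rmult_lt_compat_l; lra|].
  right. field. lra.
Qed.

Lemma initial_slope_close c c' : cmax <= c' <= 0 ->
  Rabs (initial_slope c' - initial_slope c)
  <= Rabs (rate c' - rate c) + Rabs (rate c) * Rabs (thetas c' - thetas c).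
Proof.
  intros Hc'. unfold initial_slope.
  replace (rate c' * (thetas c' - heat_ratio) - rate c * (thetas c - heat_ratio)) with
    ((rate c' - rate c) * (thetas c' - heat_ratio) + rate c * (thetas c' - thetas c)) by ring.
  eapply Rle_trans; [apply Rabs_triang|]. rewrite !Rabs_mult.
  apply Rplus_le_compat_r.
  assert (Rabs (thetas c' - heat_ratio) <= 1)
    by (pose proof (thetas_range c' Hc'); pose proof heat_ratio_range; apply Rabs_le; lra).
  pose proof (Rabs_pos (rate c' - rate c)). nra.
Qed.

Lemma initial_gap_le c c' B r : cmax <= c' <= 0 -> r <= 1 ->
  Rabs (thetas c' - thetas c) < r -> Rabs (rate c' - rate c) < r ->
  (thetas c' - thetas c)^2 + (initial_slope c' - initial_slope c)^2 + (rate c' - rate c)^2 * B^2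
  <= r * (1 + (1 + Rabs (rate c))^2 + B^2).
Proof.
  intros Hc' Hr1 Ha Hk.
  pose proof (initial_slope_close c c' Hc') as Hp.
  rewrite <- (pow2_abs (thetas c' - thetas c)), <- (pow2_abs (initial_slope c' - initial_slope c)),
          <- (pow2_abs (rate c' - rate c)).
  pose proof (Rabs_pos (thetas c' - thetas c)). pose proof (Rabs_pos (rate c' - rate c)).
  pose proof (Rabs_pos (initial_slope c' - initial_slope c)). pose proof (Rabs_pos (rate c)).
  pose proof (pow2_ge_0 B).
  assert (Hp' : Rabs (initial_slope c' - initial_slope c) <= r * (1 + Rabs (rate c))) by nra.
  assert (Rabs (thetas c' - thetas c) ^ 2 <= r) by nra.
  assert (Rabs (initial_slope c' - initial_slope c) ^ 2 <= r * (1 + Rabs (rate c)) ^ 2).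
  { apply Rle_trans with ((r * (1 + Rabs (rate c))) ^ 2); [apply pow_incr; lra|].
    rewrite Rpow_mult_distr. apply Rmult_le_compat_r; [apply pow2_ge_0| nra]. }
  assert (Rabs (rate c' - rate c) ^ 2 * B ^ 2 <= r * B ^ 2)
    by (apply Rmult_le_compat_r; [lra| nra]).
  lra.
Qed.

Lemma shoot_continuous_dependence c X eps : cmax <= c <= 0 -> 0 <= X -> 0 < eps ->
  exists d, 0 < d /\ forall c', cmax <= c' <= 0 -> Rabs (c' - c) < d ->
    forall y, 0 <= y <= X ->
      Rabs (shoot_T c' y - shoot_T c y) < eps /\ Rabs (shoot_P c' y - shoot_P c y) < eps.
Proof.
  intros Hc HX He.
  destruct (continuity_ab_maj (fun y => Rabs (shoot_P c y)) 0 X HX) as [ym [Hym _]].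
  { intros y _. apply (continuity_pt_comp (shoot_P c) Rabs);
      [apply shoot_P_continuous| apply Rcontinuity_abs]. }
  set (B := Rabs (shoot_P c ym)).
  set (C := 2 + 2 * (Rabs (rate c) + 1) + L).
  set (K := 1 + (1 + Rabs (rate c))^2 + B^2).
  assert (HK : 1 <= K) by (unfold K; pose proof (pow2_ge_0 (1 + Rabs (rate c)));
                           pose proof (pow2_ge_0 B); lra).
  set (r := Rmin 1 (eps^2 * exp (- (C * X)) / (2 * K))).
  assert (Hr0 : 0 < r).
  { apply Rmin_pos; [lra|]. apply Rdiv_lt_0_compat; [|lra].
    apply Rmult_lt_0_compat; [nra| apply exp_pos]. }
  assert (Hr : r <= 1 /\ r <= eps^2 * exp (- (C * X)) / (2 * K))
    by (split; [apply Rmin_l| apply Rmin_r]).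
  destruct (initial_data_close c Hc r Hr0) as [d [Hd Hclose]].
  exists d. split; [exact Hd|]. intros c' Hc' Hcc' y Hy.
  destruct (Hclose c' Hc' Hcc') as [Ha Hk].
  pose proof (initial_gap_le c c' B r Hc' (proj1 Hr) Ha Hk) as Hinit. fold K in Hinit.
  assert (Hdist := solves_sq_dist_le G L (rate c') (rate c) (shoot_T c') (shoot_P c')
                     (shoot_T c) (shoot_P c) L_nonneg G_lipschitz (shoot_solves c') (shoot_solves c)
                     B y (proj1 Hy) ltac:(intros s Hs; apply Hym; lra)).
  unfold sq_dist in Hdist. rewrite !shoot_T_0, !shoot_P_0 in Hdist.
  assert (Hrate : sq_dist_rate L (rate c') * y <= C * X).
  { unfold sq_dist_rate, C. pose proof (Rabs_pos (rate c')).
    assert (Rabs (rate c') <= Rabs (rate c) + 1).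
    { replace (rate c') with (rate c + (rate c' - rate c)) by ring.
      eapply Rle_trans; [apply Rabs_triang| lra]. }
    apply Rmult_le_compat; lra. }
  assert (Hbound : (shoot_T c' y - shoot_T c y)^2 + (shoot_P c' y - shoot_P c y)^2 <= eps^2 / 2).
  { eapply Rle_trans; [exact Hdist|].
    apply Rle_trans with (eps^2 * exp (- (C * X)) / (2 * K) * K * exp (C * X)).
    - apply Rmult_le_compat; [pose proof (pow2_ge_0 (thetas c' - thetas c));
        pose proof (pow2_ge_0 (initial_slope c' - initial_slope c));
        pose proof (pow2_ge_0 (rate c' - rate c)); pose proof (pow2_ge_0 B); nra
        | left; apply exp_pos| nra| apply exp_le_of_le, Hrate].
    - right. field_simplify; [|lra]. rewrite Rmult_assoc, <- exp_plus.
      replace (- (C * X) + C * X) with 0 by ring. rewrite exp_0. field. }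
  pose proof (pow2_ge_0 (shoot_T c' y - shoot_T c y)).
  pose proof (pow2_ge_0 (shoot_P c' y - shoot_P c y)).
  split; apply Rabs_def1; nra.
Qed.

Definition undershoot c :=
  exists x, 0 <= x /\ shoot_P c x < 0 /\ forall y, 0 <= y <= x -> shoot_T c y < 1.
Definition overshoot c := exists x, 0 <= x /\ 1 < shoot_T c x.

Lemma undershoot_open c : cmax <= c <= 0 -> undershoot c ->
  exists d, 0 < d /\ forall c', cmax <= c' <= 0 -> Rabs (c' - c) < d -> undershoot c'.
Proof.
  intros Hc [x [Hx [HP HT]]].
  destruct (continuity_ab_maj (shoot_T c) 0 x Hx (fun y _ => shoot_T_continuous c y))
    as [ym [Hym Hym_range]].
  pose proof (HT ym Hym_range).
  set (eps := Rmin (- shoot_P c x) (1 - shoot_T c ym)).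
  assert (He : 0 < eps) by (apply Rmin_pos; lra).
  assert (Heps : eps <= - shoot_P c x /\ eps <= 1 - shoot_T c ym)
    by (split; [apply Rmin_l| apply Rmin_r]).
  destruct (shoot_continuous_dependence c x eps Hc Hx He) as [d [Hd Hnear]].
  exists d. split; [exact Hd|]. intros c' Hc' Hcc'. exists x. split; [exact Hx|]. split.
  - destruct (Hnear c' Hc' Hcc' x ltac:(lra)) as [_ A]. apply Rabs_def2 in A. lra.
  - intros y Hy. destruct (Hnear c' Hc' Hcc' y Hy) as [A _]. apply Rabs_def2 in A.
    pose proof (Hym y Hy). lra.
Qed.

Lemma overshoot_open c : cmax <= c <= 0 -> overshoot c ->
  exists d, 0 < d /\ forall c', cmax <= c' <= 0 -> Rabs (c' - c) < d -> overshoot c'.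
Proof.
  intros Hc [x [Hx HT]].
  destruct (shoot_continuous_dependence c x (shoot_T c x - 1) Hc Hx ltac:(lra)) as [d [Hd Hnear]].
  exists d. split; [exact Hd|]. intros c' Hc' Hcc'. exists x. split; [exact Hx|].
  destruct (Hnear c' Hc' Hcc' x ltac:(lra)) as [A _]. apply Rabs_def2 in A. lra.
Qed.

(* At c = cmin the front starts on the temperature heat_ratio with zero slope,
   and G > 0 makes it turn down at once. *)
Lemma undershoot_cmin : undershoot cmin.
Proof.
  pose proof heat_ratio_range. pose proof thetas_cmin_ratio as Ha.
  assert (Hp : initial_slope cmin = 0) by (unfold initial_slope; rewrite Ha; ring).
  pose proof (shoot_P_derive cmin 0) as HD. rewrite Rmax_left, shoot_P_0, shoot_T_0, Hp, Ha in HD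
    by lra.
  unfold front_rhs in HD. rewrite Rmult_0_r, Rminus_0_l in HD.
  pose proof (G_pos heat_ratio ltac:(lra)).
  destruct (is_derive_neg_right _ _ _ HD ltac:(lra)) as [d1 [Hd1 Hright]].
  destruct (continuity_pt_eps _ _ (shoot_T_continuous cmin 0) (1 - heat_ratio) ltac:(lra))
    as [d2 [Hd2 Hnear]].
  rewrite shoot_T_0, Ha in Hnear.
  set (x := Rmin d1 d2 / 2).
  pose proof (Rmin_l d1 d2). pose proof (Rmin_r d1 d2). pose proof (Rmin_pos d1 d2 Hd1 Hd2).
  exists x. split; [unfold x; lra|]. split.
  - specialize (Hright x ltac:(unfold x; lra)). rewrite Rplus_0_l, shoot_P_0, Hp in Hright.
    exact Hright.
  - intros y Hy. specialize (Hnear y ltac:(apply Rabs_def1; unfold x in Hy; lra)).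
    apply Rabs_def2 in Hnear. lra.
Qed.

Lemma overshoot_cmax : overshoot cmax.
Proof.
  pose proof heat_ratio_range.
  assert (Hp : 0 < initial_slope cmax)
    by (unfold initial_slope, rate; rewrite thetas_cmax; apply Rmult_lt_0_compat; nra).
  pose proof (shoot_T_derive cmax 0) as HD. rewrite shoot_P_0 in HD.
  destruct (is_derive_pos_right _ _ _ HD Hp) as [d [Hd Hright]].
  exists (d / 2). split; [lra|].
  specialize (Hright (d / 2) ltac:(lra)). rewrite shoot_T_0, thetas_cmax, Rplus_0_l in Hright.
  exact Hright.
Qed.

(* Once P < 0 it stays negative, so T can no longer climb above 1. *)
Lemma not_undershoot_and_overshoot c : undershoot c -> overshoot c -> False.
Proof.
  intros [x [Hx [HP HT]]] [z [Hz HTz]].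
  destruct (Rle_dec z x) as [Hzx|Hzx]; [specialize (HT z ltac:(lra)); lra|].
  assert (shoot_T c z <= shoot_T c x); [|specialize (HT x ltac:(lra)); lra].
  apply (solves_T_ge G (rate c) _ (shoot_P c) (shoot_solves c)); [lra|].
  intros s Hs. left.
  apply (solves_P_neg_persists G (rate c) (shoot_T c) (shoot_P c) (shoot_solves c) G_nonneg x);
    [lra| exact HP].
Qed.

Lemma exists_neither : exists c, cmax <= c <= cmin /\ ~ overshoot c /\ ~ undershoot c.
Proof.
  apply (interval_not_covered overshoot undershoot cmax cmin); try lra.
  - exact overshoot_cmax.
  - exact undershoot_cmin.
  - intros c _ HO HU. exact (not_undershoot_and_overshoot c HU HO).
  - intros c Hc HO. destruct (overshoot_open c ltac:(lra) HO) as [d [Hd H]].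
    exists d. split; [exact Hd|]. intros c' Hc'. apply H. lra.
  - intros c Hc HU. destruct (undershoot_open c ltac:(lra) HU) as [d [Hd H]].
    exists d. split; [exact Hd|]. intros c' Hc'. apply H. lra.
Qed.

Lemma rate_pos c : c < 0 -> 0 < rate c.
Proof. intros Hc. unfold rate. nra. Qed.

Lemma thetas_between c : cmax < c < cmin -> heat_ratio < thetas c < 1.
Proof.
  intros Hc. rewrite <- thetas_cmax, <- thetas_cmin_ratio.
  split; apply thetas_decr; lra.
Qed.

Lemma initial_slope_pos c : cmax < c < cmin -> 0 < initial_slope c.
Proof.
  intros Hc. pose proof (thetas_between c Hc). pose proof (rate_pos c ltac:(lra)).
  unfold initial_slope. apply Rmult_lt_0_compat; lra.
Qed.

Section Neither.
Variable c : R.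
Hypothesis c_range : cmax <= c <= cmin.
Hypothesis not_over : ~ overshoot c.
Hypothesis not_under : ~ undershoot c.

Lemma neither_speed : cmax < c < cmin.
Proof.
  split.
  - destruct (proj1 c_range) as [H|H]; [exact H|].
    exfalso. apply not_over. rewrite <- H. exact overshoot_cmax.
  - destruct (proj2 c_range) as [H|H]; [exact H|].
    exfalso. apply not_under. rewrite H. exact undershoot_cmin.
Qed.

Lemma neither_T_le_1 x : 0 <= x -> shoot_T c x <= 1.
Proof. intros Hx. apply Rnot_lt_le. intros H. apply not_over. now exists x. Qed.

(* A touching point T = 1 would be an interior maximum, hence P = 0 there too. *)
Lemma neither_T_lt_1 x : 0 <= x -> shoot_T c x < 1.
Proof.
  intros Hx. destruct (neither_T_le_1 x Hx) as [H|H]; [exact H| exfalso].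
  pose proof (thetas_between c neither_speed).
  assert (Hx0 : 0 < x) by (destruct Hx as [Hx|<-]; [exact Hx| rewrite shoot_T_0 in H; lra]).
  assert (HP : shoot_P c x = 0).
  { apply (is_derive_interior_max (shoot_T c) x (shoot_P c x) 0 (x + 1));
      [lra| apply shoot_T_derive|].
    intros y Hy. rewrite H. apply neither_T_le_1. lra. }
  destruct (solves_equilibrium_backward G L (rate c) (shoot_T c) (shoot_P c) x L_nonneg
              G_lipschitz G_1 (shoot_solves c) Hx0 H HP) as [HT0 _].
  rewrite shoot_T_0 in HT0. lra.
Qed.

Lemma neither_P_nonneg x : 0 <= x -> 0 <= shoot_P c x.
Proof.
  intros Hx. apply Rnot_lt_le. intros H. apply not_under.
  exists x. split; [exact Hx|]. split; [exact H|].
  intros y Hy. apply neither_T_lt_1. lra.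
Qed.

(* A zero of P would be an interior minimum, while there P' = - G(T) < 0. *)
Lemma neither_P_pos x : 0 <= x -> 0 < shoot_P c x.
Proof.
  intros Hx. destruct (neither_P_nonneg x Hx) as [H|H]; [exact H| exfalso].
  assert (Hx0 : 0 < x).
  { destruct Hx as [Hx|<-]; [exact Hx|]. rewrite shoot_P_0 in H.
    pose proof (initial_slope_pos c neither_speed). lra. }
  pose proof (shoot_P_derive c x) as HD. rewrite Rmax_left in HD by lra.
  unfold front_rhs in HD. rewrite <- H, Rmult_0_r, Rminus_0_l in HD.
  assert (Hzero := is_derive_interior_max (fun y => - shoot_P c y) x _ 0 (x + 1) ltac:(lra)
                     (is_derive_opp _ _ _ HD)).
  assert (- - G (shoot_T c x) = 0).
  { apply Hzero. intros y Hy. rewrite <- H. specialize (neither_P_nonneg y ltac:(lra)). lra. }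
  pose proof (G_pos (shoot_T c x) (neither_T_lt_1 x Hx)). lra.
Qed.

Lemma neither_front x : 0 <= x -> 0 < shoot_P c x /\ shoot_T c x < 1.
Proof. intros Hx. split; [apply neither_P_pos| apply neither_T_lt_1]; exact Hx. Qed.

Lemma neither_T_range x : 0 <= x -> 0 <= shoot_T c x < 1.
Proof.
  intros Hx. split; [|apply neither_T_lt_1, Hx].
  apply Rle_trans with (shoot_T c 0); [rewrite shoot_T_0; apply thetas_range; lra|].
  apply (solves_T_le G (rate c) _ (shoot_P c) (shoot_solves c)); [exact Hx|].
  intros s Hs. left. apply neither_P_pos. lra.
Qed.

Lemma neither_limits : is_lim (shoot_T c) p_infty 1 /\ is_lim (shoot_P c) p_infty 0.
Proof.
  pose proof (rate_pos c ltac:(lra)).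
  split.
  - apply (front_T_limit G (rate c) _ (shoot_P c) (shoot_solves c) G_pos G_continuous);
      [lra| exact neither_front].
  - apply (front_P_limit G (rate c) _ _ (shoot_solves c) G_nonneg G_pos G_continuous);
      [lra| exact neither_front|].
    rewrite shoot_T_0. apply thetas_range. lra.
Qed.

End Neither.

Definition exp_tail c x := thetas c * exp (- c * x).
Definition front_profile c x := exp_tail c (Rmin x 0) + shoot_T c (Rmax x 0) - thetas c.

Lemma front_profile_left c x : x <= 0 -> front_profile c x = exp_tail c x.
Proof. intros Hx. unfold front_profile. rewrite Rmin_left, Rmax_right, shoot_T_0 by lra. ring. Qed.

Lemma front_profile_right c x : 0 <= x -> front_profile c x = shoot_T c x.
Proof.
  intros Hx. unfold front_profile, exp_tail.
  rewrite Rmin_right, Rmax_left, Rmult_0_r, exp_0 by lra. ring.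
Qed.

Lemma Derive_exp_tail c x : Derive (exp_tail c) x = - c * exp_tail c x.
Proof. apply is_derive_unique. unfold exp_tail. auto_derive; [exact I| ring]. Qed.

Lemma Derive2_exp_tail c x : Derive (Derive (exp_tail c)) x = c ^ 2 * exp_tail c x.
Proof.
  rewrite (Derive_ext _ (fun x => - c * exp_tail c x)) by apply Derive_exp_tail.
  apply is_derive_unique. unfold exp_tail. auto_derive; [exact I| ring].
Qed.

Lemma exp_tail_C2 c : C2 (exp_tail c).
Proof.
  split; [|split].
  - intros x. unfold exp_tail. auto_derive. exact I.
  - intros x. apply (ex_derive_ext (fun x => - c * exp_tail c x));
      [intros; symmetry; apply Derive_exp_tail|].
    unfold exp_tail. auto_derive. exact I.
  - intros x. apply (continuous_ext (fun x => c ^ 2 * exp_tail c x));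
      [intros; symmetry; apply Derive2_exp_tail|].
    apply continuity_pt_filterlim, continuity_pt_ex_derive. unfold exp_tail. auto_derive. exact I.
Qed.

Lemma Derive_shoot_T c x : Derive (shoot_T c) x = shoot_P c x.
Proof. apply is_derive_unique, shoot_T_derive. Qed.

Lemma Derive2_shoot_T c x :
  Derive (Derive (shoot_T c)) x = front_rhs c (shoot_T c (Rmax x 0)) (shoot_P c (Rmax x 0)).
Proof.
  rewrite (Derive_ext _ (shoot_P c)) by apply Derive_shoot_T.
  apply is_derive_unique, shoot_P_derive.
Qed.

Lemma shoot_T_C2 c : C2 (shoot_T c).
Proof.
  split; [|split].
  - intros x. eexists. apply shoot_T_derive.
  - intros x. apply (ex_derive_ext (shoot_P c)); [intros; symmetry; apply Derive_shoot_T|].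
    eexists. apply shoot_P_derive.
  - intros x. apply (continuous_ext (fun x => front_rhs c (shoot_T c (Rmax x 0)) (shoot_P c (Rmax x 0))));
      [intros; symmetry; apply Derive2_shoot_T|].
    apply continuity_pt_filterlim. unfold front_rhs. apply continuity_pt_minus.
    + apply continuity_pt_mult; [apply continuity_pt_const; now intros ? ?|].
      apply (continuity_pt_comp (fun y => Rmax y 0) (shoot_P c));
        [apply continuity_pt_Rmax_0| apply shoot_P_continuous].
    + apply (continuity_pt_comp (fun y => shoot_T c (Rmax y 0)) G); [|apply G_continuous].
      apply (continuity_pt_comp (fun y => Rmax y 0) (shoot_T c));
        [apply continuity_pt_Rmax_0| apply shoot_T_continuous].
Qed.

Lemma front_profile_continuous c x : continuous (front_profile c) x.
Proof.
  apply continuity_pt_filterlim. unfold front_profile.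
  apply continuity_pt_minus; [|apply continuity_pt_const; now intros ? ?].
  apply continuity_pt_plus.
  - apply (continuity_pt_comp (fun y => Rmin y 0) (exp_tail c)).
    + apply (continuity_pt_ext (fun y => - Rmax (- y) 0)).
      { intros y. unfold Rmin, Rmax. destruct (Rle_dec y 0), (Rle_dec (- y) 0); lra. }
      apply continuity_pt_opp.
      apply (continuity_pt_comp Ropp (fun y => Rmax y 0));
        [apply continuity_pt_opp, continuity_pt_id| apply continuity_pt_Rmax_0].
    + apply continuity_pt_ex_derive. unfold exp_tail. auto_derive. exact I.
  - apply (continuity_pt_comp (fun y => Rmax y 0) (shoot_T c));
      [apply continuity_pt_Rmax_0| apply shoot_T_continuous].
Qed.

Lemma front_profile_range c : cmax <= c <= cmin -> ~ overshoot c -> ~ undershoot c ->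
  forall x, 0 <= front_profile c x <= 1.
Proof.
  intros Hc HO HU x. destruct (Rle_dec x 0) as [Hx|Hx].
  - rewrite front_profile_left by exact Hx. unfold exp_tail.
    pose proof (neither_speed c Hc HO HU). pose proof (thetas_range c ltac:(lra)).
    assert (exp (- c * x) <= 1) by (rewrite <- exp_0; apply exp_le_of_le; nra).
    pose proof (exp_pos (- c * x)). nra.
  - rewrite front_profile_right by lra. pose proof (neither_T_range c Hc HO HU x ltac:(lra)). lra.
Qed.

Lemma front_profile_Pc c : cmax <= c <= cmin -> ~ overshoot c -> ~ undershoot c ->
  Pc eta Qg Qp Psi thetas c (front_profile c).
Proof.
  intros Hc HO HU.
  pose proof (neither_speed c Hc HO HU) as Hc'.
  destruct (neither_limits c Hc HO HU) as [HTlim HPlim].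
  split; [apply front_profile_range; auto|]. split; [apply front_profile_continuous|].
  exists (exp_tail c), (shoot_T c).
  split; [apply exp_tail_C2|]. split; [apply shoot_T_C2|].
  split; [intros x Hx; symmetry; apply front_profile_left, Hx|].
  split; [intros x Hx; symmetry; apply front_profile_right, Hx|].
  split; [intros x _; rewrite Derive2_exp_tail, Derive_exp_tail; ring|].
  split.
  { intros x Hx. rewrite Derive2_shoot_T, Derive_shoot_T, Rmax_left by lra.
    rewrite front_profile_right, <- G_Psi by (pose proof (neither_T_range c Hc HO HU x ltac:(lra)); lra).
    unfold front_rhs, rate. ring. }
  split.
  { apply (is_lim_ext_loc (exp_tail c)); [exists 0; intros x Hx; symmetry; apply front_profile_left; lra|].
    apply is_lim_exp_linear_m_infty. lra. }
  split; [rewrite front_profile_right, shoot_T_0 by lra; reflexivity|].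
  split.
  { apply (is_lim_ext_loc (shoot_T c)); [|exact HTlim].
    exists 0. intros x Hx. symmetry. apply front_profile_right. lra. }
  split.
  { apply (is_lim_ext (fun x => (- c * thetas c) * exp (- c * x)));
      [intros x; rewrite Derive_exp_tail; unfold exp_tail; ring|].
    apply is_lim_exp_linear_m_infty. lra. }
  split; [apply (is_lim_ext (shoot_P c)); [intros x; symmetry; apply Derive_shoot_T| exact HPlim]|].
  rewrite Derive_shoot_T, Derive_exp_tail, shoot_P_0.
  unfold initial_slope, rate, heat_ratio, exp_tail, S.
  rewrite Rmult_0_r, exp_0. field. lra.
Qed.

Lemma Pc_right_front c theta : cmax <= c <= 0 -> Pc eta Qg Qp Psi thetas c theta ->
  exists T P, solves G (rate c) T P /\ T 0 = thetas c /\ P 0 = initial_slope c /\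
    (forall x, 0 <= x -> T x <= 1) /\ is_lim T p_infty 1 /\ is_lim P p_infty 0.
Proof.
  intros Hc [Hrange [_ [thl [thr [Hl2 [Hr2 [Hl [Hr [Hodel [Hoder
           [Hlim_m [H0 [Hlim_p [Hdlim_m [Hdlim_p Hinterface]]]]]]]]]]]]]]].
  pose proof (left_slope c theta thl Hl2 Hl Hodel Hlim_m Hdlim_m) as Hleft.
  destruct Hr2 as [Hr1 [Hr2 _]].
  exists thr, (Derive thr). split; [|split; [|split; [|split; [|split]]]].
  - split; [intros x; apply Derive_correct, Hr1|]. split; [exact Hr2|].
    intros x Hx. replace (rate c * Derive thr x - G (thr x)) with (Derive (Derive thr) x).
    + apply Derive_correct, Hr2.
    + rewrite Hr, G_Psi by (try apply Hrange; lra). unfold rate.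
      specialize (Hoder x Hx). lra.
  - rewrite Hr by lra. exact H0.
  - unfold S in Hinterface. rewrite Hleft, H0 in Hinterface.
    unfold initial_slope, rate, heat_ratio. rewrite (Rplus_comm Qp Qg) in *. lra.
  - intros x Hx. rewrite Hr by exact Hx. apply Hrange.
  - apply (is_lim_ext_loc theta); [|exact Hlim_p]. exists 0. intros x Hx. symmetry. apply Hr. lra.
  - exact Hdlim_p.
Qed.

Section RightFront.
Variables (c : R) (T P : R -> R).
Hypothesis c_range : cmax <= c <= 0.
Hypothesis sol : solves G (rate c) T P.
Hypothesis T_0 : T 0 = thetas c.
Hypothesis P_0 : P 0 = initial_slope c.
Hypothesis T_le_1 : forall x, 0 <= x -> T x <= 1.
Hypothesis T_lim : is_lim T p_infty 1.

Lemma right_front_speed : cmax < c < cmin.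
Proof.
  pose proof heat_ratio_range. split.
  - destruct (proj1 c_range) as [Hlt|Heq]; [exact Hlt| exfalso].
    assert (Hp : 0 < P 0) by (rewrite P_0; unfold initial_slope; rewrite <- Heq, thetas_cmax;
                              apply Rmult_lt_0_compat; [apply rate_pos|]; lra).
    destruct (is_derive_pos_right T 0 (P 0) (proj1 sol 0) Hp) as [d [Hd Hright]].
    specialize (Hright (d / 2) ltac:(lra)). rewrite Rplus_0_l, T_0, <- Heq, thetas_cmax in Hright.
    pose proof (T_le_1 (d / 2) ltac:(lra)). lra.
  - apply Rnot_le_lt. intros Hge.
    assert (Ha : thetas c <= heat_ratio).
    { rewrite <- thetas_cmin_ratio. destruct Hge as [Hlt|<-]; [left; apply thetas_decr|]; lra. }
    assert (Hp : P 0 <= 0).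
    { rewrite P_0. unfold initial_slope, rate.
      assert (0 <= - eta * c) by nra. nra. }
    assert (HT : forall y, 0 <= y -> T y <= heat_ratio).
    { intros y Hy. rewrite <- T_0 in Ha. apply Rle_trans with (T 0); [|exact Ha].
      apply (solves_T_ge G (rate c) T P sol); [exact Hy|]. intros s Hs.
      apply (solves_P_nonpos_persists G (rate c) T P sol G_nonneg 0); [lra| exact Hp]. }
    pose proof (is_lim_p_infty_le T 1 heat_ratio 0 T_lim HT). lra.
Qed.

(* If P vanished somewhere, T would reach 1 there with P = 0, which only the
   equilibrium does. *)
Lemma right_front_P_pos x : 0 <= x -> 0 < P x.
Proof.
  intros Hx. apply Rnot_le_lt. intros Hle.
  pose proof right_front_speed as Hc. pose proof (thetas_between c Hc).
  assert (Hx0 : 0 < x).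
  { destruct Hx as [Hx|<-]; [exact Hx|]. rewrite P_0 in Hle.
    pose proof (initial_slope_pos c Hc). lra. }
  assert (Hafter : forall y, x <= y -> T y <= T x).
  { intros y Hy. apply (solves_T_ge G (rate c) T P sol); [exact Hy|]. intros s Hs.
    apply (solves_P_nonpos_persists G (rate c) T P sol G_nonneg x); [lra| exact Hle]. }
  assert (HT1 : T x = 1).
  { apply Rle_antisym; [apply T_le_1; lra|].
    apply (is_lim_p_infty_le T 1 (T x) x T_lim Hafter). }
  assert (HP0 : P x = 0).
  { apply (is_derive_interior_max T x (P x) 0 (x + 1)); [lra| apply sol|].
    intros y Hy. rewrite HT1. apply T_le_1. lra. }
  destruct (solves_equilibrium_backward G L (rate c) T P x L_nonneg G_lipschitz G_1 sol Hx0 HT1 HP0)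
    as [HT0 _].
  lra.
Qed.

Lemma right_front_T_lt_1 x : 0 <= x -> T x < 1.
Proof.
  intros Hx. apply Rlt_le_trans with (T (x + 1)); [|apply T_le_1; lra].
  apply (solves_T_lt G (rate c) T P sol); [lra|]. intros s Hs. apply right_front_P_pos. lra.
Qed.

End RightFront.

Lemma Pc_speed_unique c1 c2 theta1 theta2 : cmax <= c1 <= 0 -> cmax <= c2 <= 0 -> c2 < c1 ->
  Pc eta Qg Qp Psi thetas c1 theta1 -> Pc eta Qg Qp Psi thetas c2 theta2 -> False.
Proof.
  intros Hc1 Hc2 Hlt H1 H2.
  destruct (Pc_right_front c1 theta1 Hc1 H1) as [T1 [P1 [S1 [T10 [P10 [Hle1 [HT1 _]]]]]]].
  destruct (Pc_right_front c2 theta2 Hc2 H2) as [T2 [P2 [S2 [T20 [P20 [Hle2 [HT2 HP2]]]]]]].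
  pose proof (right_front_speed c1 T1 P1 Hc1 S1 T10 P10 Hle1 HT1).
  apply (fronts_comparison G (rate c1) (rate c2) heat_ratio T1 P1 T2 P2 G_pos); auto.
  - apply rate_pos. lra.
  - unfold rate. nra.
  - rewrite T10, T20. apply thetas_decr; lra.
  - rewrite P10, T10. reflexivity.
  - rewrite P20, T20. reflexivity.
  - apply (right_front_P_pos c1 T1 P1); auto.
  - intros x Hx. split; [apply (right_front_P_pos c2 T2 P2)| apply (right_front_T_lt_1 c2 T2 P2)]; auto.
Qed.

Theorem front_speed_exists_unique : exists c,
    (cmax <= c <= 0 /\ exists theta, Pc eta Qg Qp Psi thetas c theta) /\
    (forall c', cmax <= c' <= 0 ->
       (exists theta, Pc eta Qg Qp Psi thetas c' theta) -> c' = c) /\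
    cmax < c < cmin.
Proof.
  destruct exists_neither as [c [Hc [HO HU]]].
  pose proof (neither_speed c Hc HO HU).
  exists c. split; [split; [lra| exists (front_profile c); apply front_profile_Pc; auto]|].
  split; [|lra].
  intros c' Hc' [theta' Hsol'].
  pose proof (front_profile_Pc c Hc HO HU) as Hsol.
  destruct (Rtotal_order c' c) as [Hlt|[Heq|Hgt]]; [exfalso| exact Heq| exfalso].
  - exact (Pc_speed_unique c c' _ _ ltac:(lra) Hc' Hlt Hsol Hsol').
  - exact (Pc_speed_unique c' c _ _ Hc' ltac:(lra) Hgt Hsol' Hsol).
Qed.

End Shooting.

Theorem proposition8
  (eta Qg Qp : R) (Psi : R -> R) (cmax cmin : R) (thetas : R -> R)
  (Heta : 0 < eta) (HQg : 0 < Qg) (HQp : 0 < Qp)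
  (* Psi : [0,1] -> [0,oo), C^oo on [0,1], > 0 on [0,1), Psi(1) = 0 *)
  (HPsi_smooth : exists g : R -> R,
      smooth_on_open (fun _ => True) g /\
      (forall x, 0 <= x <= 1 -> g x = Psi x))
  (HPsi_nonneg : forall x, 0 <= x <= 1 -> 0 <= Psi x)
  (HPsi_pos : forall x, 0 <= x < 1 -> 0 < Psi x)
  (HPsi_1 : Psi 1 = 0)
  (* theta_s : [cmax,0] -> [0,1] *)
  (Hcmax : cmax < 0)
  (Hts_range : forall c, cmax <= c <= 0 -> 0 <= thetas c <= 1)
  (Hts_cont : forall c, cmax <= c <= 0 ->
      filterlim thetas (within (fun y => cmax <= y <= 0) (locally c))
                (locally (thetas c)))
  (Hts_decr : forall a b, cmax <= a -> a < b -> b <= 0 -> thetas b < thetas a)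
  (Hts_0 : thetas 0 = 0)
  (Hts_cmax : thetas cmax = 1)
  (Hts_smooth : exists g : R -> R,
      smooth_on_open (fun x => x < 0) g /\
      (forall c, cmax <= c < 0 -> g c = thetas c) /\
      (forall c, cmax <= c < 0 -> Derive g c < 0))
  (* c_min *)
  (Hcmin : cmax < cmin < 0)
  (Hts_cmin : thetas cmin = Qp / (Qg + Qp)) :
  exists c,
    (cmax <= c <= 0 /\ exists theta, Pc eta Qg Qp Psi thetas c theta) /\
    (forall c', cmax <= c' <= 0 ->
       (exists theta, Pc eta Qg Qp Psi thetas c' theta) -> c' = c) /\
    cmax < c < cmin.
Proof.
  destruct HPsi_smooth as [g [Hg HgPsi]].
  destruct (smooth_lipschitz_01 g Hg) as [L [HL Hlip]].
  apply (front_speed_exists_unique eta Qg Qp Psi cmax cmin thetas (fun x => g (clamp01 x)) L);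
    auto.
  - intros u v. eapply Rle_trans; [apply Hlip; apply clamp01_range|].
    apply Rmult_le_compat_l; [exact HL| apply clamp01_lipschitz].
  - intros x Hx. rewrite clamp01_id by exact Hx. apply HgPsi, Hx.
  - intros t. rewrite HgPsi by apply clamp01_range. apply HPsi_nonneg, clamp01_range.
  - intros t Ht. rewrite HgPsi by apply clamp01_range. apply HPsi_pos.
    pose proof (clamp01_range t). pose proof (clamp01_lt_1 t Ht). lra.
Qed.
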